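(* Let $L^\bullet_{\mathrm{cl}}$ be a classical generalized operator algebra and $\mathfrak A$ a complex $\cdots\to H(g^j)\xrightarrow{A_j}H(g^{j+1})\to\cdots$ with $A_j\in L^0_{\mathrm{cl}}((g^j,g^{j+1}))$, $j\in\mathbb Z$. The following are equivalent: (a) $\mathfrak A$ is elliptic; (b) all Laplacians $\Delta_j=A_{j-1}A_{j-1}^*+A_j^*A_j$, $j\in\mathbb Z$, are elliptic. These properties imply (c) $\mathfrak A$ has a parametrix in $L^\bullet_{\mathrm{cl}}$ (operators $B_j\in L^0_{\mathrm{cl}}((g^{j+1},g^j))$ with $A_{j-1}B_{j-1}+B_jA_j-1$ smoothing for all $j$) and (d) $\mathfrak A$ is a Fredholm complex. If $L^\bullet_{\mathrm{cl}}$ has the Fredholm property, (a)–(d) are all equivalent; if it has the extended Fredholm property, the parametrix in (c) can be chosen to be a complex ($B_jB_{j+1}=0$).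
   Context: Generalized operator algebra $L^\bullet$: a set $G$ of weights; to each $g\in G$ a Hilbert space $H(g)$; for each pair $(g^0,g^1)$ vector spaces $L^{-\infty}\subset L^0\subset\mathcal L(H(g^0),H(g^1))$ with compact smoothing operators, identities in $L^0((g,g))$, closed under composition (orders adding in $\{0,-\infty\}$) and Hilbert adjoints. Classical: there is a principal symbol map $A\mapsto\sigma(A)=(\sigma_1(A),\dots,\sigma_n(A))$ assigning to $A\in L^0_{\mathrm{cl}}((g^0,g^1))$ Hilbert bundle morphisms $\sigma_\ell(A):E_\ell(g^0)\to E_\ell(g^1)$ (for fixed $\ell$ all bundles $E_\ell(g)$ have the same base) which is linear, multiplicative under composition, satisfies $\sigma_\ell(A^* )=\sigma_\ell(A)^*$ (fibrewise adjoint), vanishes on smoothing operators, and such that $A$ is elliptic (all $\sigma_\ell(A)$ isomorphisms) iff $A$ has a parametrix in $L^0_{\mathrm{cl}}$ (inverse modulo smoothing operators). A complex $\mathfrak A$ is elliptic if for each $\ell$ the family of complexes $\cdots\to E_\ell(g^j)\xrightarrow{\sigma_\ell(A_j)}E_\ell(g^{j+1})\to\cdots$ is exact in every fibre. Fredholm property: every $A\in L^0$ has a parametrix iff it is Fredholm. Extended Fredholm property: Fredholm property plus: every selfadjoint Fredholm $A\in L^0((g,g))$ has a parametrix $B$ with $AB=BA=1-\pi$, $\pi$ the orthogonal projection onto $\ker A$. A Fredholm complex has finite-dimensional cohomology. *)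

From Stdlib Require Import Reals ZArith List.
Import ListNotations.
Set Implicit Arguments.
Open Scope R_scope.

Record C := mkC { Cre : R; Cim : R }.
Definition C0 : C := mkC 0 0.
Definition C1 : C := mkC 1 0.
Definition Cadd (a b : C) : C := mkC (Cre a + Cre b) (Cim a + Cim b).
Definition Cmul (a b : C) : C :=
  mkC (Cre a * Cre b - Cim a * Cim b) (Cre a * Cim b + Cim a * Cre b).
Definition Cconj (a : C) : C := mkC (Cre a) (- Cim a).

(* ---------- complex Hilbert spaces ----------
   inner product linear in the first, conjugate linear in the second argument *)
Record Hilbert := {
  hcar :> Type;
  hzero : hcar;
  hadd : hcar -> hcar -> hcar;
  hopp : hcar -> hcar;
  hscal : C -> hcar -> hcar;
  hinner : hcar -> hcar -> C;
  hadd_assoc : forall x y z, hadd x (hadd y z) = hadd (hadd x y) z;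
  hadd_comm : forall x y, hadd x y = hadd y x;
  hadd_0 : forall x, hadd hzero x = x;
  hadd_opp : forall x, hadd x (hopp x) = hzero;
  hscal_assoc : forall a b x, hscal a (hscal b x) = hscal (Cmul a b) x;
  hscal_1 : forall x, hscal C1 x = x;
  hscal_addr : forall a x y, hscal a (hadd x y) = hadd (hscal a x) (hscal a y);
  hscal_addl : forall a b x, hscal (Cadd a b) x = hadd (hscal a x) (hscal b x);
  hinner_conj : forall x y, hinner y x = Cconj (hinner x y);
  hinner_add : forall x y z, hinner (hadd x y) z = Cadd (hinner x z) (hinner y z);
  hinner_scal : forall a x y, hinner (hscal a x) y = Cmul a (hinner x y);
  hinner_pos : forall x, Cim (hinner x x) = 0 /\ 0 <= Cre (hinner x x);
  hinner_def : forall x, Cre (hinner x x) = 0 -> x = hzero;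
  hcomplete : forall u : nat -> hcar,
    (forall eps, 0 < eps -> exists N, forall m k, (N <= m)%nat -> (N <= k)%nat ->
       sqrt (Cre (hinner (hadd (u m) (hopp (u k))) (hadd (u m) (hopp (u k))))) < eps) ->
    exists l, forall eps, 0 < eps -> exists N, forall m, (N <= m)%nat ->
       sqrt (Cre (hinner (hadd (u m) (hopp l)) (hadd (u m) (hopp l)))) < eps
}.

Arguments hzero {h}.
Arguments hadd {h}.
Arguments hopp {h}.
Arguments hscal {h}.
Arguments hinner {h}.

Definition hnorm {X : Hilbert} (x : X) : R := sqrt (Cre (hinner x x)).
Definition hdist {X : Hilbert} (x y : X) : R := hnorm (hadd x (hopp y)).

Definition converges {X : Hilbert} (u : nat -> X) (l : X) : Prop :=
  forall eps, 0 < eps -> exists N, forall m, (N <= m)%nat -> hdist (u m) l < eps.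

Definition bounded_linear {X Y : Hilbert} (f : X -> Y) : Prop :=
  (forall x y, f (hadd x y) = hadd (f x) (f y)) /\
  (forall c x, f (hscal c x) = hscal c (f x)) /\
  (exists M, forall x, hnorm (f x) <= M * hnorm x).

Definition compact_op {X Y : Hilbert} (f : X -> Y) : Prop :=
  bounded_linear f /\
  forall u : nat -> X, (exists M, forall m, hnorm (u m) <= M) ->
    exists phi : nat -> nat, (forall m, (phi m < phi (S m))%nat) /\
      exists l, converges (fun m => f (u (phi m))) l.

Definition is_adjoint {X Y : Hilbert} (f : X -> Y) (f' : Y -> X) : Prop :=
  forall x y, hinner (f x) y = hinner x (f' y).

Definition bijective_map {X Y : Type} (f : X -> Y) : Prop :=
  (forall u v, f u = f v -> u = v) /\ (forall w, exists u, f u = w).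

Definition oid {X : Hilbert} : X -> X := fun x => x.
Definition ozero {X Y : Hilbert} : X -> Y := fun _ => hzero.
Definition oadd {X Y : Hilbert} (f g : X -> Y) : X -> Y := fun x => hadd (f x) (g x).
Definition osub {X Y : Hilbert} (f g : X -> Y) : X -> Y := fun x => hadd (f x) (hopp (g x)).
Definition oscal {X Y : Hilbert} (c : C) (f : X -> Y) : X -> Y := fun x => hscal c (f x).
Definition ocomp {X Y Z : Hilbert} (g : Y -> Z) (f : X -> Y) : X -> Z := fun x => g (f x).

Fixpoint lincomb {X : Hilbert} (cs : list C) (vs : list X) : X :=
  match cs, vs with
  | c :: cs', v :: vs' => hadd (hscal c v) (lincomb cs' vs')
  | _, _ => hzero
  end.

(* Fredholm operator: finite-dimensional kernel and cokernel
   (closedness of the range is then automatic for bounded operators). *)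
Definition fredholm_op {X Y : Hilbert} (f : X -> Y) : Prop :=
  bounded_linear f /\
  (exists vs : list X, forall u, f u = hzero -> exists cs, u = lincomb cs vs) /\
  (exists ws : list Y, forall y, exists x cs, y = hadd (f x) (lincomb cs ws)).

(* ---------- classical generalized operator algebra ----------
   L0 = L^0_cl, Linf = L^{-infty}; the principal symbol has components
   sigma_l, l < nsym; E l g is a Hilbert bundle over sbase l, given by its
   fibres sE l g x. *)
Unset Implicit Arguments.
Record ClGOA := {
  gw : Type;
  H : gw -> Hilbert;
  L0 : forall g0 g1 : gw, (H g0 -> H g1) -> Prop;
  Linf : forall g0 g1 : gw, (H g0 -> H g1) -> Prop;
  Linf_L0 : forall g0 g1 (A : H g0 -> H g1), Linf g0 g1 A -> L0 g0 g1 A;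
  L0_bl : forall g0 g1 (A : H g0 -> H g1), L0 g0 g1 A -> bounded_linear A;
  Linf_compact : forall g0 g1 (A : H g0 -> H g1), Linf g0 g1 A -> compact_op A;
  L0_zero : forall g0 g1, L0 g0 g1 ozero;
  L0_add : forall g0 g1 (A B : H g0 -> H g1), L0 g0 g1 A -> L0 g0 g1 B -> L0 g0 g1 (oadd A B);
  L0_scal : forall g0 g1 c (A : H g0 -> H g1), L0 g0 g1 A -> L0 g0 g1 (oscal c A);
  Linf_zero : forall g0 g1, Linf g0 g1 ozero;
  Linf_add : forall g0 g1 (A B : H g0 -> H g1), Linf g0 g1 A -> Linf g0 g1 B -> Linf g0 g1 (oadd A B);
  Linf_scal : forall g0 g1 c (A : H g0 -> H g1), Linf g0 g1 A -> Linf g0 g1 (oscal c A);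
  L0_id : forall g, L0 g g oid;
  L0_comp : forall g0 g1 g2 (A : H g0 -> H g1) (B : H g1 -> H g2),
      L0 g0 g1 A -> L0 g1 g2 B -> L0 g0 g2 (ocomp B A);
  Linf_comp_l : forall g0 g1 g2 (A : H g0 -> H g1) (B : H g1 -> H g2),
      Linf g0 g1 A -> L0 g1 g2 B -> Linf g0 g2 (ocomp B A);
  Linf_comp_r : forall g0 g1 g2 (A : H g0 -> H g1) (B : H g1 -> H g2),
      L0 g0 g1 A -> Linf g1 g2 B -> Linf g0 g2 (ocomp B A);
  adj : forall g0 g1 : gw, (H g0 -> H g1) -> (H g1 -> H g0);
  adj_spec : forall g0 g1 (A : H g0 -> H g1), L0 g0 g1 A -> is_adjoint A (adj g0 g1 A);
  L0_adj : forall g0 g1 (A : H g0 -> H g1), L0 g0 g1 A -> L0 g1 g0 (adj g0 g1 A);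
  Linf_adj : forall g0 g1 (A : H g0 -> H g1), Linf g0 g1 A -> Linf g1 g0 (adj g0 g1 A);
  nsym : nat;
  sbase : nat -> Type;
  sE : forall l : nat, gw -> sbase l -> Hilbert;
  sigma : forall (l : nat) (g0 g1 : gw), (H g0 -> H g1) ->
            forall x : sbase l, sE l g0 x -> sE l g1 x;
  sigma_bl : forall l g0 g1 (A : H g0 -> H g1) x, (l < nsym)%nat ->
      L0 g0 g1 A -> bounded_linear (sigma l g0 g1 A x);
  sigma_add : forall l g0 g1 (A B : H g0 -> H g1) x, (l < nsym)%nat ->
      L0 g0 g1 A -> L0 g0 g1 B ->
      sigma l g0 g1 (oadd A B) x = oadd (sigma l g0 g1 A x) (sigma l g0 g1 B x);
  sigma_scal : forall l g0 g1 c (A : H g0 -> H g1) x, (l < nsym)%nat ->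
      L0 g0 g1 A -> sigma l g0 g1 (oscal c A) x = oscal c (sigma l g0 g1 A x);
  sigma_comp : forall l g0 g1 g2 (A : H g0 -> H g1) (B : H g1 -> H g2) x, (l < nsym)%nat ->
      L0 g0 g1 A -> L0 g1 g2 B ->
      sigma l g0 g2 (ocomp B A) x = ocomp (sigma l g1 g2 B x) (sigma l g0 g1 A x);
  sigma_adj : forall l g0 g1 (A : H g0 -> H g1) x, (l < nsym)%nat ->
      L0 g0 g1 A -> is_adjoint (sigma l g0 g1 A x) (sigma l g1 g0 (adj g0 g1 A) x);
  sigma_smooth : forall l g0 g1 (A : H g0 -> H g1) x, (l < nsym)%nat ->
      Linf g0 g1 A -> sigma l g0 g1 A x = ozero;
  sigma_elliptic : forall g0 g1 (A : H g0 -> H g1), L0 g0 g1 A ->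
      ((forall l, (l < nsym)%nat -> forall x, bijective_map (sigma l g0 g1 A x)) <->
       exists B : H g1 -> H g0, L0 g1 g0 B /\
         Linf g0 g0 (osub (ocomp B A) oid) /\ Linf g1 g1 (osub (ocomp A B) oid))
}.

Set Implicit Arguments.
Arguments L0 _ {g0 g1}.
Arguments Linf _ {g0 g1}.
Arguments adj _ {g0 g1}.
Arguments sigma _ _ {g0 g1}.

Section Notions.
Variable O : ClGOA.

Definition elliptic_op {g0 g1 : gw O} (A : H O g0 -> H O g1) : Prop :=
  forall l, (l < nsym O)%nat -> forall x, bijective_map (sigma O l A x).

Definition has_parametrix {g0 g1 : gw O} (A : H O g0 -> H O g1) : Prop :=
  exists B : H O g1 -> H O g0, L0 O B /\
    Linf O (osub (ocomp B A) oid) /\ Linf O (osub (ocomp A B) oid).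

Definition fredholm_property : Prop :=
  forall (g0 g1 : gw O) (A : H O g0 -> H O g1), L0 O A ->
    (has_parametrix A <-> fredholm_op A).

Definition orth_proj_ker {g0 g1 : gw O} (A : H O g0 -> H O g1) (P : H O g0 -> H O g0) : Prop :=
  forall x, A (P x) = hzero /\
    forall y, A y = hzero -> hinner (hadd x (hopp (P x))) y = C0.

Definition ext_fredholm_property : Prop :=
  fredholm_property /\
  forall (g : gw O) (A : H O g -> H O g), L0 O A -> is_adjoint A A -> fredholm_op A ->
    exists (B P : H O g -> H O g), L0 O B /\ orth_proj_ker A P /\
      ocomp B A = osub oid P /\ ocomp A B = osub oid P.

Variable g : Z -> gw O.

Definition trH {i k : Z} (e : i = k) (v : H O (g i)) : H O (g k) :=
  eq_rect i (fun m => hcar (H O (g m))) v k e.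

Variable A : forall j : Z, H O (g j) -> H O (g (Z.succ j)).

(* A_{j-1} : H(g^{j-1}) -> H(g^j), identifying g^{(j-1)+1} with g^j *)
Definition Aprev (j : Z) : H O (g (Z.pred j)) -> H O (g j) :=
  fun v => trH (Z.succ_pred j) (A (Z.pred j) v).

Definition is_complex : Prop :=
  forall j v, A j (Aprev j v) = hzero.

Definition Laplacian (j : Z) : H O (g j) -> H O (g j) :=
  oadd (ocomp (Aprev j) (adj O (Aprev j))) (ocomp (adj O (A j)) (A j)).

Definition elliptic_complex : Prop :=
  forall l, (l < nsym O)%nat -> forall (x : sbase O l) (j : Z) (v : sE O l (g j) x),
    sigma O l (A j) x v = hzero <-> exists w, sigma O l (Aprev j) x w = v.

Definition Bnext (B : forall j : Z, H O (g (Z.succ j)) -> H O (g j)) (j : Z)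
  : H O (g j) -> H O (g (Z.pred j)) :=
  fun v => B (Z.pred j) (trH (eq_sym (Z.succ_pred j)) v).

Definition cx_parametrix (B : forall j : Z, H O (g (Z.succ j)) -> H O (g j)) : Prop :=
  forall j, L0 O (B j) /\
    Linf O (osub (oadd (ocomp (Aprev j) (Bnext B j)) (ocomp (B j) (A j))) oid).

(* finite-dimensional cohomology ker A_j / im A_{j-1} at every j *)
Definition fredholm_complex : Prop :=
  forall j, exists vs : list (H O (g j)),
    forall u, A j u = hzero -> exists cs w, u = hadd (lincomb cs vs) (Aprev j w).

End Notions.

(* Exactness of a symbol complex at degree j and bijectivity of the symbolic
   Laplacian a a^* + b^* b are equivalent by the Hodge decomposition of a Hilbert complex
   with closed ranges (and the ranges are closed because they are kernels).  A parametrix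
   G_j of the Laplacians gives the complex parametrix B_j = A_j^* G_(j+1), since
   A_j Delta_j = Delta_(j+1) A_j forces G_(j+1) A_j = A_j G_j modulo smoothing operators.
   A parametrix makes A_(j-1) B_(j-1) + B_j A_j = 1 + K with K compact; K preserves
   ker A_j, and by Riesz theory 1 + K has finite codimensional range there, whence finite
   cohomology.  Conversely finite cohomology makes the ranges of A closed (finite codimension
   inside a closed kernel), hence every Laplacian Fredholm, and the Fredholm property turns
   this back into ellipticity.  With the extended Fredholm property G_j can be chosen to
   commute exactly with A_j^*, and then B_j B_(j+1) = (A_(j+1) A_j)^* G G = 0. *)

From Stdlib Require Import Reals ZArith List.
From Stdlib Require Import Lra Psatz Classical ClassicalEpsilon FunctionalExtensionality Eqdep_dec.
Import ListNotations.
Open Scope R_scope.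

Arguments hadd_assoc {h}.
Arguments hadd_comm {h}.
Arguments hadd_0 {h}.
Arguments hadd_opp {h}.
Arguments hscal_assoc {h}.
Arguments hscal_1 {h}.
Arguments hscal_addr {h}.
Arguments hscal_addl {h}.
Arguments hinner_conj {h}.
Arguments hinner_add {h}.
Arguments hinner_scal {h}.
Arguments hinner_pos {h}.
Arguments hinner_def {h}.
Arguments hcomplete {h}.

Lemma Ceq (a b : C) : Cre a = Cre b -> Cim a = Cim b -> a = b.
Proof. destruct a, b; simpl; intros; subst; reflexivity. Qed.

Definition Copp (a : C) : C := mkC (- Cre a) (- Cim a).
Definition RC (t : R) : C := mkC t 0.
Definition Ci : C := mkC 0 1.

Section VectorAlgebra.
Context {X : Hilbert}.
Implicit Types x y z : X.

Definition hsub x y : X := hadd x (hopp y).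
Definition hnorm2 x : R := Cre (hinner x x).
Definition rinner x y : R := Cre (hinner x y).

Lemma hadd_0r x : hadd x hzero = x.
Proof. rewrite hadd_comm; apply hadd_0. Qed.

Lemma hadd_opp_l x : hadd (hopp x) x = hzero.
Proof. rewrite hadd_comm; apply hadd_opp. Qed.

Lemma hadd_cancel_l x y z : hadd x y = hadd x z -> y = z.
Proof.
  intro E. assert (E2 : hadd (hopp x) (hadd x y) = hadd (hopp x) (hadd x z)) by now rewrite E.
  rewrite !hadd_assoc, hadd_opp_l, !hadd_0 in E2. exact E2.
Qed.

Lemma hadd_self_0 x : hadd x x = x -> x = hzero.
Proof. intro E. apply (hadd_cancel_l x). rewrite E, hadd_0r. reflexivity. Qed.

Lemma hscal_0l x : hscal C0 x = hzero.
Proof. apply hadd_self_0. rewrite <- hscal_addl. f_equal. apply Ceq; simpl; ring. Qed.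

Lemma hscal_0r a : hscal a (@hzero X) = hzero.
Proof. apply hadd_self_0. rewrite <- hscal_addr, hadd_0. reflexivity. Qed.

Lemma hopp_scal x : hopp x = hscal (RC (-1)) x.
Proof.
  apply (hadd_cancel_l x). rewrite hadd_opp.
  rewrite <- (hscal_1 x) at 1. rewrite <- hscal_addl, <- (hscal_0l x).
  f_equal. apply Ceq; unfold RC, C1; simpl; ring.
Qed.

Lemma hsub_diag x : hsub x x = hzero.
Proof. apply hadd_opp. Qed.

Lemma hopp_0 : hopp (@hzero X) = hzero.
Proof. rewrite hopp_scal. apply hscal_0r. Qed.

Lemma hsub_eq0 x y : hsub x y = hzero -> x = y.
Proof.
  unfold hsub; intro E. assert (E2 : hadd (hadd x (hopp y)) y = hadd hzero y) by now rewrite E.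
  rewrite <- hadd_assoc, hadd_opp_l, hadd_0r, hadd_0 in E2. exact E2.
Qed.

Lemma hsub_0r x : hsub x hzero = x.
Proof. unfold hsub. rewrite hopp_0. apply hadd_0r. Qed.

Lemma hscal_sub a x y : hscal a (hsub x y) = hsub (hscal a x) (hscal a y).
Proof.
  unfold hsub. rewrite hscal_addr, !hopp_scal, !hscal_assoc. do 2 f_equal.
  apply Ceq; unfold RC; simpl; ring.
Qed.

Lemma hinner_addr x y z : hinner x (hadd y z) = Cadd (hinner x y) (hinner x z).
Proof.
  rewrite hinner_conj, hinner_add, (hinner_conj y x), (hinner_conj z x).
  apply Ceq; simpl; ring.
Qed.

Lemma hinner_scalr a x y : hinner x (hscal a y) = Cmul (hinner x y) (Cconj a).
Proof. rewrite hinner_conj, hinner_scal, (hinner_conj y x). apply Ceq; simpl; ring. Qed.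

Lemma hinner_0l y : hinner hzero y = C0.
Proof. rewrite <- (hscal_0l hzero), hinner_scal. apply Ceq; simpl; ring. Qed.

Lemma hinner_0r y : hinner y hzero = C0.
Proof. rewrite hinner_conj, hinner_0l. apply Ceq; simpl; ring. Qed.

Lemma hinner_oppl x y : hinner (hopp x) y = Copp (hinner x y).
Proof. rewrite hopp_scal, hinner_scal. apply Ceq; simpl; ring. Qed.

Lemma hinner_oppr x y : hinner x (hopp y) = Copp (hinner x y).
Proof. rewrite hopp_scal, hinner_scalr. apply Ceq; simpl; ring. Qed.

Lemma hinner_C0_sym x y : hinner x y = C0 -> hinner y x = C0.
Proof. intro E. rewrite hinner_conj, E. apply Ceq; simpl; ring. Qed.

Lemma rinner_sym x y : rinner x y = rinner y x.
Proof. unfold rinner. rewrite (hinner_conj x y). reflexivity. Qed.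

Lemma rinner_addl x y z : rinner (hadd x y) z = rinner x z + rinner y z.
Proof. unfold rinner. rewrite hinner_add. reflexivity. Qed.

Lemma rinner_addr x y z : rinner x (hadd y z) = rinner x y + rinner x z.
Proof. unfold rinner. rewrite hinner_addr. reflexivity. Qed.

Lemma rinner_subl x y z : rinner (hsub x y) z = rinner x z - rinner y z.
Proof. unfold hsub, rinner. rewrite hinner_add, hinner_oppl. simpl. ring. Qed.

Lemma rinner_subr x y z : rinner x (hsub y z) = rinner x y - rinner x z.
Proof. unfold hsub, rinner. rewrite hinner_addr, hinner_oppr. simpl. ring. Qed.

Lemma rinner_scalr t x y : rinner x (hscal (RC t) y) = t * rinner x y.
Proof. unfold rinner. rewrite hinner_scalr. simpl. ring. Qed.

Lemma rinner_0l y : rinner hzero y = 0.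
Proof. unfold rinner. rewrite hinner_0l. reflexivity. Qed.

Lemma rinner_0r y : rinner y hzero = 0.
Proof. unfold rinner. rewrite hinner_0r. reflexivity. Qed.

Lemma rinner_Ci x y : rinner x (hscal Ci y) = Cim (hinner x y).
Proof. unfold rinner. rewrite hinner_scalr. simpl. ring. Qed.

Lemma rinner_C0 x y : hinner x y = C0 -> rinner x y = 0.
Proof. unfold rinner. intros ->. reflexivity. Qed.

Lemma hnorm2_nonneg x : 0 <= hnorm2 x.
Proof. apply hinner_pos. Qed.

Lemma hnorm2_eq0 x : hnorm2 x = 0 -> x = hzero.
Proof. apply hinner_def. Qed.

Lemma hnorm2_0 : hnorm2 (@hzero X) = 0.
Proof. unfold hnorm2. rewrite hinner_0l. reflexivity. Qed.

Lemma hnorm2_add x y : hnorm2 (hadd x y) = hnorm2 x + hnorm2 y + 2 * rinner x y.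
Proof.
  unfold hnorm2. fold (rinner (hadd x y) (hadd x y)) (rinner x x) (rinner y y).
  rewrite rinner_addl, !rinner_addr, (rinner_sym y x). ring.
Qed.

Lemma hnorm2_sub x y : hnorm2 (hsub x y) = hnorm2 x + hnorm2 y - 2 * rinner x y.
Proof.
  unfold hnorm2. fold (rinner (hsub x y) (hsub x y)) (rinner x x) (rinner y y).
  rewrite rinner_subl, !rinner_subr, (rinner_sym y x). ring.
Qed.

Lemma hnorm2_scal t x : hnorm2 (hscal (RC t) x) = t * t * hnorm2 x.
Proof. unfold hnorm2. rewrite hinner_scal, hinner_scalr. simpl. ring. Qed.

Lemma hnorm2_scalC a x : hnorm2 (hscal a x) = (Cre a * Cre a + Cim a * Cim a) * hnorm2 x.
Proof.
  unfold hnorm2. rewrite hinner_scal, hinner_scalr. simpl.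
  destruct (hinner_pos x) as [H0 _]. rewrite H0. ring.
Qed.

Lemma pythagoras x y : hinner x y = C0 -> hnorm2 (hadd x y) = hnorm2 x + hnorm2 y.
Proof. intro E. rewrite hnorm2_add, (rinner_C0 _ _ E). ring. Qed.

Lemma cauchy_schwarz2 x y : rinner x y * rinner x y <= hnorm2 x * hnorm2 y.
Proof.
  destruct (Req_dec (hnorm2 x) 0) as [E|E].
  - apply hnorm2_eq0 in E. subst. rewrite rinner_0l, hnorm2_0. lra.
  - pose proof (hnorm2_nonneg x).
    set (t := rinner x y / hnorm2 x).
    pose proof (hnorm2_nonneg (hsub y (hscal (RC t) x))) as Q.
    rewrite hnorm2_sub, hnorm2_scal, rinner_scalr, (rinner_sym y x) in Q.
    assert (E2 : hnorm2 x * (hnorm2 y + t * t * hnorm2 x - 2 * (t * rinner x y))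
                 = hnorm2 x * hnorm2 y - rinner x y * rinner x y) by (unfold t; field; lra).
    assert (0 <= hnorm2 x * (hnorm2 y + t * t * hnorm2 x - 2 * (t * rinner x y)))
      by (apply Rmult_le_pos; lra).
    lra.
Qed.

End VectorAlgebra.

Lemma hvec_ext {X : Hilbert} (v w : X) : (forall z, hinner v z = hinner w z) -> v = w.
Proof.
  intro E. apply hsub_eq0, hnorm2_eq0. unfold hnorm2, hsub.
  rewrite hinner_add, hinner_oppl, E. simpl. ring.
Qed.

(* Identities between vector expressions are proved by pairing both sides with an
   arbitrary vector, which reduces them to identities of complex numbers. *)
Ltac hvec_eq_by tac := apply hvec_ext; let z := fresh "z" in intro z; unfold hsub;
  repeat (rewrite ?hinner_add, ?hinner_scal, ?hinner_oppl, ?hinner_0l);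
  apply Ceq; unfold Copp, RC, C0, C1, Ci, Cadd, Cmul; simpl; tac.

Ltac hvec_eq := hvec_eq_by ltac:(ring).
Ltac hvec_eq_field := hvec_eq_by ltac:(field; try lra).

Section NormConvergence.
Context {X : Hilbert}.
Implicit Types x y z : X.

Lemma hnorm_nonneg x : 0 <= hnorm x.
Proof. apply sqrt_pos. Qed.

Lemma hnorm_sq x : hnorm x * hnorm x = hnorm2 x.
Proof. apply sqrt_sqrt, hnorm2_nonneg. Qed.

Lemma hnorm_eq0 x : hnorm x = 0 -> x = hzero.
Proof. intro E. apply hnorm2_eq0. rewrite <- hnorm_sq, E. ring. Qed.

Lemma hnorm_0 : hnorm (@hzero X) = 0.
Proof. unfold hnorm. fold (hnorm2 (@hzero X)). rewrite hnorm2_0. apply sqrt_0. Qed.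

Lemma hnorm_le_sq a x : 0 <= a -> (hnorm x <= a <-> hnorm2 x <= a * a).
Proof. intro Ha. rewrite <- hnorm_sq. pose proof (hnorm_nonneg x). split; intro; nra. Qed.

Lemma hnorm_lt_sq a x : 0 <= a -> (hnorm x < a <-> hnorm2 x < a * a).
Proof. intro Ha. rewrite <- hnorm_sq. pose proof (hnorm_nonneg x). split; intro; nra. Qed.

Lemma cauchy_schwarz x y : rinner x y <= hnorm x * hnorm y.
Proof.
  pose proof (cauchy_schwarz2 x y) as CS. rewrite <- (hnorm_sq x), <- (hnorm_sq y) in CS.
  pose proof (hnorm_nonneg x); pose proof (hnorm_nonneg y).
  destruct (Rle_dec (rinner x y) (hnorm x * hnorm y)) as [|Hn]; auto.
  assert (0 <= hnorm x * hnorm y) by nra. nra.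
Qed.



Lemma hnorm_triangle x y : hnorm (hadd x y) <= hnorm x + hnorm y.
Proof.
  pose proof (hnorm_nonneg x); pose proof (hnorm_nonneg y).
  apply hnorm_le_sq; [lra|]. rewrite hnorm2_add.
  pose proof (cauchy_schwarz x y). rewrite <- (hnorm_sq x), <- (hnorm_sq y). nra.
Qed.

Lemma hnorm_scal t x : hnorm (hscal (RC t) x) = Rabs t * hnorm x.
Proof.
  unfold hnorm. fold (hnorm2 (hscal (RC t) x)) (hnorm2 x).
  rewrite hnorm2_scal, sqrt_mult_alt by nra.
  change (t * t) with (Rsqr t). rewrite sqrt_Rsqr_abs. reflexivity.
Qed.

Lemma hnorm_scalC a x : hnorm (hscal a x) = sqrt (Cre a * Cre a + Cim a * Cim a) * hnorm x.
Proof.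
  unfold hnorm. fold (hnorm2 (hscal a x)) (hnorm2 x).
  rewrite hnorm2_scalC, sqrt_mult_alt by nra. reflexivity.
Qed.

Lemma hnorm_opp x : hnorm (hopp x) = hnorm x.
Proof.
  rewrite hopp_scal, hnorm_scal. replace (Rabs (-1)) with 1 by (rewrite Rabs_left1; lra). ring.
Qed.

Lemma cauchy_schwarz_abs x y : Rabs (rinner x y) <= hnorm x * hnorm y.
Proof.
  unfold Rabs; destruct Rcase_abs; [|apply cauchy_schwarz].
  pose proof (cauchy_schwarz (hopp x) y) as CS. unfold rinner in *.
  rewrite hinner_oppl, hnorm_opp in CS. simpl in CS. lra.
Qed.

Lemma hnorm_sub_le x y : hnorm (hsub x y) <= hnorm x + hnorm y.
Proof. unfold hsub. rewrite <- (hnorm_opp y). apply hnorm_triangle. Qed.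

Lemma hnorm_sub_sym x y : hnorm (hsub x y) = hnorm (hsub y x).
Proof.
  unfold hnorm. fold (hnorm2 (hsub x y)) (hnorm2 (hsub y x)).
  rewrite !hnorm2_sub, rinner_sym. f_equal; ring.
Qed.

Lemma hdist_triangle x y z : hnorm (hsub x z) <= hnorm (hsub x y) + hnorm (hsub y z).
Proof. replace (hsub x z) with (hadd (hsub x y) (hsub y z)) by hvec_eq. apply hnorm_triangle. Qed.

Lemma hnorm_reverse_triangle x y : hnorm x - hnorm y <= hnorm (hsub x y).
Proof. pose proof (hdist_triangle x y hzero). rewrite !hsub_0r in H. lra. Qed.

Lemma converges_unique (u : nat -> X) l1 l2 : converges u l1 -> converges u l2 -> l1 = l2.
Proof.
  intros C1 C2. apply hsub_eq0, hnorm_eq0.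
  destruct (Req_dec (hnorm (hsub l1 l2)) 0) as [E|E]; auto.
  pose proof (hnorm_nonneg (hsub l1 l2)).
  set (e := hnorm (hsub l1 l2) / 2).
  destruct (C1 e) as [N1 H1]; [unfold e; lra|]. destruct (C2 e) as [N2 H2]; [unfold e; lra|].
  set (m := (N1 + N2)%nat). specialize (H1 m ltac:(unfold m; lia)). specialize (H2 m ltac:(unfold m; lia)).
  unfold hdist in *. fold (hsub (u m) l1) (hsub (u m) l2) in *.
  pose proof (hdist_triangle l1 (u m) l2) as Tri. rewrite (hnorm_sub_sym l1 (u m)) in Tri. unfold e in *. exfalso. lra.
Qed.

Lemma converges_const (l : X) : converges (fun _ : nat => l) l.
Proof. intros e He. exists O. intros. unfold hdist. fold (hsub l l). rewrite hsub_diag, hnorm_0. auto. Qed.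

Lemma converges_dominated (u : nat -> X) l (f : nat -> R) :
  (forall m, hnorm (hsub (u m) l) <= f m) -> Un_cv f 0 -> converges u l.
Proof.
  intros Hb Hf e He. destruct (Hf e He) as [N HN]. exists N. intros m Hm.
  specialize (HN m Hm). unfold R_dist in HN. rewrite Rminus_0_r in HN.
  unfold hdist. specialize (Hb m). apply Rabs_def2 in HN. unfold hsub in Hb. lra.
Qed.

Lemma converges_add (u v : nat -> X) a b : converges u a -> converges v b ->
  converges (fun m => hadd (u m) (v m)) (hadd a b).
Proof.
  intros Cu Cv e He. destruct (Cu (e / 2)) as [N1 H1]; [lra|]. destruct (Cv (e / 2)) as [N2 H2]; [lra|].
  exists (N1 + N2)%nat. intros m Hm. specialize (H1 m ltac:(lia)); specialize (H2 m ltac:(lia)).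
  unfold hdist in *. fold (hsub (hadd (u m) (v m)) (hadd a b)) (hsub (u m) a) (hsub (v m) b) in *.
  replace (hsub (hadd (u m) (v m)) (hadd a b)) with (hadd (hsub (u m) a) (hsub (v m) b)) by hvec_eq.
  pose proof (hnorm_triangle (hsub (u m) a) (hsub (v m) b)). lra.
Qed.

Lemma converges_scal (u : nat -> X) l a : converges u l -> converges (fun m => hscal a (u m)) (hscal a l).
Proof.
  intros Cu e He. set (K := sqrt (Cre a * Cre a + Cim a * Cim a) + 1).
  pose proof (sqrt_pos (Cre a * Cre a + Cim a * Cim a)).
  destruct (Cu (e / K)) as [N HN]; [apply Rdiv_lt_0_compat; unfold K; lra|].
  exists N. intros m Hm. specialize (HN m Hm). unfold hdist in *.
  fold (hsub (hscal a (u m)) (hscal a l)) (hsub (u m) l) in *.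
  rewrite <- hscal_sub, hnorm_scalC. pose proof (hnorm_nonneg (hsub (u m) l)).
  apply Rle_lt_trans with (K * hnorm (hsub (u m) l)); [unfold K; nra|].
  apply Rmult_lt_compat_l with (r := K) in HN; [|unfold K; lra].
  replace (K * (e / K)) with e in HN by (field; unfold K; lra). exact HN.
Qed.

Lemma converges_sub (u v : nat -> X) a b : converges u a -> converges v b ->
  converges (fun m => hsub (u m) (v m)) (hsub a b).
Proof.
  intros Cu Cv. unfold hsub. apply converges_add; auto. rewrite hopp_scal.
  replace (fun m => hopp (v m)) with (fun m => hscal (RC (-1)) (v m))
    by (apply functional_extensionality; intro; symmetry; apply hopp_scal).
  apply converges_scal; auto.
Qed.

Lemma converges_shift (u : nat -> X) l k : converges u l -> converges (fun m => u (m + k)%nat) l.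
Proof. intros Cu e He. destruct (Cu e He) as [N HN]. exists N. intros. apply HN. lia. Qed.

Lemma converges_hnorm (u : nat -> X) l : converges u l -> Un_cv (fun m => hnorm (u m)) (hnorm l).
Proof.
  intros Cu e He. destruct (Cu e He) as [N HN]. exists N. intros m Hm. specialize (HN m Hm).
  unfold hdist in HN. fold (hsub (u m) l) in HN. unfold R_dist.
  pose proof (hnorm_reverse_triangle (u m) l). pose proof (hnorm_reverse_triangle l (u m)).
  rewrite hnorm_sub_sym in H0. apply Rabs_def1; lra.
Qed.

Lemma hnorm_limit_le (u : nat -> X) l M : converges u l -> (forall m, hnorm (u m) <= M) -> hnorm l <= M.
Proof.
  intros Cu Hb. destruct (Rle_dec (hnorm l) M) as [|Hn]; auto. exfalso.
  destruct (Cu (hnorm l - M)) as [N HN]; [lra|]. specialize (HN N (le_n _)).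
  unfold hdist in HN. fold (hsub (u N) l) in HN. pose proof (hnorm_reverse_triangle l (u N)).
  rewrite hnorm_sub_sym in H. specialize (Hb N). lra.
Qed.

Lemma converges_rinner (u : nat -> X) l y : converges u l -> Un_cv (fun m => rinner (u m) y) (rinner l y).
Proof.
  intros Cu e He. pose proof (hnorm_nonneg y).
  destruct (Cu (e / (hnorm y + 1))) as [N HN]; [apply Rdiv_lt_0_compat; lra|].
  exists N. intros m Hm. specialize (HN m Hm). unfold hdist in HN. fold (hsub (u m) l) in HN.
  unfold R_dist. rewrite <- rinner_subl.
  eapply Rle_lt_trans; [apply cauchy_schwarz_abs|]. pose proof (hnorm_nonneg (hsub (u m) l)).
  apply Rle_lt_trans with (hnorm (hsub (u m) l) * (hnorm y + 1)); [nra|].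
  apply Rmult_lt_compat_r with (r := hnorm y + 1) in HN; [|lra].
  replace (e / (hnorm y + 1) * (hnorm y + 1)) with e in HN by (field; lra). exact HN.
Qed.

Definition cauchy (u : nat -> X) : Prop :=
  forall eps, 0 < eps -> exists N, forall m k, (N <= m)%nat -> (N <= k)%nat ->
    hnorm (hsub (u m) (u k)) < eps.

Lemma cauchy_converges (u : nat -> X) : cauchy u -> exists l, converges u l.
Proof. apply hcomplete. Qed.

End NormConvergence.

Lemma inv_INR_small eps : 0 < eps -> exists N, forall n, (N <= n)%nat -> / (INR n + 1) < eps.
Proof.
  intro He. destruct (archimed_cor1 eps He) as [N [HN1 HN2]]. exists N. intros n Hn.
  eapply Rle_lt_trans; [|exact HN1]. apply Rinv_le_contravar; [apply lt_0_INR; lia|].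
  apply le_INR in Hn. lra.
Qed.

Lemma half_pow_small eps : 0 < eps -> exists N, forall n, (N <= n)%nat -> (/ 2) ^ n < eps.
Proof.
  intro He. destruct (pow_lt_1_zero (/ 2)) with (y := eps) as [N HN]; auto.
  { rewrite Rabs_right; lra. }
  exists N. intros n Hn. specialize (HN n Hn).
  rewrite Rabs_right in HN; auto. apply Rle_ge, pow_le. lra.
Qed.

Section BoundedLinear.
Context {X Y : Hilbert}.
Variable f : X -> Y.
Hypothesis Hf : bounded_linear f.

Lemma bl_add x y : f (hadd x y) = hadd (f x) (f y).
Proof. apply Hf. Qed.

Lemma bl_scal c x : f (hscal c x) = hscal c (f x).
Proof. apply Hf. Qed.

Lemma bl_zero : f hzero = hzero.
Proof. rewrite <- (hscal_0l (@hzero X)), bl_scal, hscal_0l. reflexivity. Qed.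

Lemma bl_opp x : f (hopp x) = hopp (f x).
Proof. rewrite !hopp_scal, bl_scal. reflexivity. Qed.

Lemma bl_sub x y : f (hsub x y) = hsub (f x) (f y).
Proof. unfold hsub. rewrite bl_add, bl_opp. reflexivity. Qed.

Lemma bl_bound : exists M, 0 < M /\ forall x, hnorm (f x) <= M * hnorm x.
Proof.
  destruct Hf as [_ [_ [M HM]]]. exists (Rabs M + 1). split; [pose proof (Rabs_pos M); lra|].
  intro x. specialize (HM x). pose proof (hnorm_nonneg x). pose proof (Rle_abs M). nra.
Qed.

Lemma bl_converges (u : nat -> X) l : converges u l -> converges (fun m => f (u m)) (f l).
Proof.
  intros Cu. destruct bl_bound as [M [HM HB]]. intros e He.
  destruct (Cu (e / M)) as [N HN]; [apply Rdiv_lt_0_compat; lra|].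
  exists N. intros m Hm. specialize (HN m Hm). unfold hdist in *.
  fold (hsub (f (u m)) (f l)) (hsub (u m) l) in *. rewrite <- bl_sub.
  eapply Rle_lt_trans; [apply HB|].
  apply Rmult_lt_compat_l with (r := M) in HN; auto.
  replace (M * (e / M)) with e in HN by (field; lra). exact HN.
Qed.

End BoundedLinear.

Section BoundedLinearOps.
Context {X Y Z : Hilbert}.

Lemma bl_id : bounded_linear (@oid X).
Proof. unfold oid. split; [|split]; auto. exists 1. intro; lra. Qed.

Lemma bl_comp (f : X -> Y) (g : Y -> Z) : bounded_linear f -> bounded_linear g -> bounded_linear (ocomp g f).
Proof.
  intros Hf Hg. unfold ocomp. split; [|split].
  - intros. rewrite (bl_add f Hf), (bl_add g Hg). reflexivity.
  - intros. rewrite (bl_scal f Hf), (bl_scal g Hg). reflexivity.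
  - destruct (bl_bound f Hf) as [M1 [P1 B1]]. destruct (bl_bound g Hg) as [M2 [P2 B2]].
    exists (M2 * M1). intro x. eapply Rle_trans; [apply B2|].
    rewrite Rmult_assoc. apply Rmult_le_compat_l; [lra|apply B1].
Qed.

Lemma bl_oadd (f g : X -> Y) : bounded_linear f -> bounded_linear g -> bounded_linear (oadd f g).
Proof.
  intros Hf Hg. unfold oadd. split; [|split].
  - intros. rewrite (bl_add f Hf), (bl_add g Hg). hvec_eq.
  - intros. rewrite (bl_scal f Hf), (bl_scal g Hg), hscal_addr. reflexivity.
  - destruct (bl_bound f Hf) as [M1 [P1 B1]]. destruct (bl_bound g Hg) as [M2 [P2 B2]].
    exists (M1 + M2). intro x. eapply Rle_trans; [apply hnorm_triangle|].
    specialize (B1 x); specialize (B2 x). lra.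
Qed.

End BoundedLinearOps.

Lemma adjoint_unique {X Y : Hilbert} (f : X -> Y) f1 f2 : is_adjoint f f1 -> is_adjoint f f2 -> f1 = f2.
Proof.
  intros A1 A2. apply functional_extensionality. intro y. apply hvec_ext. intro z.
  rewrite (hinner_conj z (f1 y)), (hinner_conj z (f2 y)), <- A1, <- A2. reflexivity.
Qed.

Lemma adjoint_comp_zero {X Y Z : Hilbert} (F : X -> Y) (F' : Y -> X) (G : Y -> Z) (G' : Z -> Y) :
  is_adjoint F F' -> is_adjoint G G' -> (forall x, G (F x) = hzero) -> forall z, F' (G' z) = hzero.
Proof.
  intros AF AG HGF z. apply hnorm2_eq0. unfold hnorm2. rewrite <- AF, <- AG, HGF, hinner_0l. reflexivity.
Qed.

Definition subsp {X : Hilbert} (S : X -> Prop) : Prop :=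
  S hzero /\ (forall x y, S x -> S y -> S (hadd x y)) /\ (forall a x, S x -> S (hscal a x)).

Definition closedS {X : Hilbert} (S : X -> Prop) : Prop :=
  forall u l, (forall m, S (u m)) -> converges u l -> S l.

Definition orth {X : Hilbert} (v : X) (S : X -> Prop) : Prop := forall s, S s -> hinner v s = C0.

Definition orthc {X : Hilbert} (S : X -> Prop) : X -> Prop := fun v => orth v S.

Section Subspaces.
Context {X : Hilbert}.
Implicit Types (x y u v : X) (S : X -> Prop).

Lemma subsp0 S : subsp S -> S hzero.
Proof. apply proj1. Qed.

Lemma subsp_add S x y : subsp S -> S x -> S y -> S (hadd x y).
Proof. intros HS. apply HS. Qed.

Lemma subsp_scal S a x : subsp S -> S x -> S (hscal a x).
Proof. intros HS. apply HS. Qed.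

Lemma subsp_sub S x y : subsp S -> S x -> S y -> S (hsub x y).
Proof.
  intros HS Hx Hy. unfold hsub. apply subsp_add; auto. rewrite hopp_scal. apply subsp_scal; auto.
Qed.

Lemma subsp_inter (S1 S2 : X -> Prop) : subsp S1 -> subsp S2 -> subsp (fun v => S1 v /\ S2 v).
Proof.
  intros H1 H2. split; [|split].
  - split; apply subsp0; auto.
  - intros x y [] []; split; apply subsp_add; auto.
  - intros a x []; split; apply subsp_scal; auto.
Qed.

Lemma closed_inter (S1 S2 : X -> Prop) : closedS S1 -> closedS S2 -> closedS (fun v => S1 v /\ S2 v).
Proof.
  intros H1 H2 u l Hu Cu. split; [apply (H1 u) | apply (H2 u)]; auto; intro m; apply Hu.
Qed.

Lemma closed_ext (P Q : X -> Prop) : (forall y, P y <-> Q y) -> closedS Q -> closedS P.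
Proof. intros E Cl u l Hu Cu. apply E. apply (Cl u); auto. intro; apply E; auto. Qed.

Lemma orth_add u v S : orth u S -> orth v S -> orth (hadd u v) S.
Proof. intros H1 H2 s Hs. rewrite hinner_add, H1, H2; auto. apply Ceq; simpl; ring. Qed.

Lemma orth_scal a u S : orth u S -> orth (hscal a u) S.
Proof. intros H1 s Hs. rewrite hinner_scal, H1; auto. apply Ceq; simpl; ring. Qed.

Lemma orth_sub u v S : orth u S -> orth v S -> orth (hsub u v) S.
Proof. intros. unfold hsub. apply orth_add; auto. rewrite hopp_scal. apply orth_scal; auto. Qed.

Lemma orth_0 S : orth (@hzero X) S.
Proof. intros s _. apply hinner_0l. Qed.

Lemma orth_self u S : orth u S -> S u -> u = hzero.
Proof. intros H1 H2. apply hnorm2_eq0. unfold hnorm2. rewrite H1; auto. Qed.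

Lemma orth_of_rinner v S : subsp S -> (forall s, S s -> rinner v s = 0) -> orth v S.
Proof.
  intros HS Hr s Hs. apply Ceq.
  - apply Hr; auto.
  - rewrite <- rinner_Ci. apply Hr, subsp_scal; auto.
Qed.

Lemma orthc_subsp S : subsp (orthc S).
Proof. split; [|split]; [apply orth_0 | intros; apply orth_add | intros; apply orth_scal]; auto. Qed.

Lemma orthc_closed S : closedS (orthc S).
Proof.
  intros u l Hu Cu s Hs.
  assert (Lim : forall y, (forall m, rinner (u m) y = 0) -> rinner l y = 0).
  { intros y Hy. apply (UL_sequence (fun m => rinner (u m) y)); [apply converges_rinner; auto|].
    intros e He. exists O. intros n _. rewrite Hy. unfold R_dist. rewrite Rminus_0_r, Rabs_R0. auto. }
  apply Ceq.
  - apply Lim. intro m. apply rinner_C0, Hu; auto.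
  - simpl. rewrite <- rinner_Ci. apply Lim. intro m. rewrite rinner_Ci, (Hu m s Hs). reflexivity.
Qed.

End Subspaces.

Lemma limit_le_of_approx (a : nat -> R) L d : Un_cv a L -> (forall n, a n <= d + / (INR n + 1)) -> L <= d.
Proof.
  intros Ca Hb. destruct (Rle_dec L d) as [|Hn]; auto. exfalso.
  destruct (inv_INR_small ((L - d) / 2)) as [N HN]; [lra|].
  destruct (Ca ((L - d) / 2)) as [M HM]; [lra|].
  specialize (HM (N + M)%nat ltac:(lia)). specialize (HN (N + M)%nat ltac:(lia)).
  specialize (Hb (N + M)%nat). unfold R_dist in HM. apply Rabs_def2 in HM. lra.
Qed.

Section Projection.
Context {X : Hilbert}.
Implicit Types x y : X.
Variable S : X -> Prop.
Hypothesis HS : subsp S.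

Lemma best_approximation_orth x p :
  S p -> (forall s, S s -> hnorm2 (hsub x p) <= hnorm2 (hsub x s)) -> orth (hsub x p) S.
Proof.
  intros Sp Hmin. apply orth_of_rinner; auto. intros s Hs.
  assert (Hq : forall t, 0 <= t * t * hnorm2 s - 2 * t * rinner (hsub x p) s).
  { intro t. assert (Ht : hnorm2 (hsub x p) <= hnorm2 (hsub x (hadd p (hscal (RC t) s))))
      by (apply Hmin, subsp_add, subsp_scal; auto).
    replace (hsub x (hadd p (hscal (RC t) s))) with (hsub (hsub x p) (hscal (RC t) s)) in Ht by hvec_eq.
    rewrite (hnorm2_sub (hsub x p)), hnorm2_scal, rinner_scalr in Ht. lra. }
  set (r := rinner (hsub x p) s) in *.
  destruct (Req_dec (hnorm2 s) 0) as [E0|E0].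
  - apply hnorm2_eq0 in E0. subst s. unfold r. apply rinner_0r.
  - pose proof (hnorm2_nonneg s). specialize (Hq (r / hnorm2 s)).
    replace (r / hnorm2 s * (r / hnorm2 s) * hnorm2 s - 2 * (r / hnorm2 s) * r)
      with (- (r * r) / hnorm2 s) in Hq by (field; lra).
    assert (0 <= - (r * r)).
    { replace (- (r * r)) with (- (r * r) / hnorm2 s * hnorm2 s) by (field; lra).
      apply Rmult_le_pos; lra. }
    nra.
Qed.

Lemma distance_infimum x : exists d, (forall s, S s -> d <= hnorm2 (hsub x s)) /\
  forall n : nat, exists s, S s /\ hnorm2 (hsub x s) < d + / (INR n + 1).
Proof.
  set (E := fun r => exists s, S s /\ r = - hnorm2 (hsub x s)).
  assert (Hb : bound E). { exists 0. intros r [s [_ ->]]. pose proof (hnorm2_nonneg (hsub x s)). lra. }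
  assert (Hne : exists r, E r) by (exists (- hnorm2 (hsub x hzero)), hzero; split; auto; apply subsp0; auto).
  destruct (completeness E Hb Hne) as [m [Hm1 Hm2]].
  exists (- m). split.
  - intros s Hs. assert (E (- hnorm2 (hsub x s))) by (exists s; auto). apply Hm1 in H. lra.
  - intro n. apply NNPP. intro Hn.
    assert (Hub : is_upper_bound E (m - / (INR n + 1))).
    { intros r [s [Hs ->]]. apply Rnot_lt_le. intro. apply Hn. exists s. split; auto. lra. }
    apply Hm2 in Hub. assert (0 < / (INR n + 1)) by (apply Rinv_0_lt_compat; pose proof (pos_INR n); lra).
    lra.
Qed.

(* Parallelogram law, applied to x - s n and x - s k with midpoint (s n + s k)/2 in S. *)
Lemma minimizing_sequence_cauchy x d (s : nat -> X) :
  (forall s, S s -> d <= hnorm2 (hsub x s)) ->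
  (forall n, S (s n) /\ hnorm2 (hsub x (s n)) < d + / (INR n + 1)) -> cauchy s.
Proof.
  intros Hinf Hs e He. destruct (inv_INR_small (e * e / 4)) as [N HN]; [nra|].
  exists N. intros n k Hn Hk. apply hnorm_lt_sq; [lra|].
  destruct (Hs n) as [Sn Hn']. destruct (Hs k) as [Sk Hk'].
  set (mid := hscal (RC (/ 2)) (hadd (s n) (s k))).
  assert (Smid : S mid) by (apply subsp_scal, subsp_add; auto).
  pose proof (Hinf mid Smid).
  assert (PG : hnorm2 (hsub (hsub x (s n)) (hsub x (s k))) + hnorm2 (hadd (hsub x (s n)) (hsub x (s k)))
     = 2 * hnorm2 (hsub x (s n)) + 2 * hnorm2 (hsub x (s k))) by (rewrite hnorm2_sub, hnorm2_add; ring).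
  replace (hsub (hsub x (s n)) (hsub x (s k))) with (hsub (s k) (s n)) in PG by hvec_eq.
  replace (hadd (hsub x (s n)) (hsub x (s k))) with (hscal (RC 2) (hsub x mid)) in PG
    by (unfold mid; hvec_eq_field).
  rewrite hnorm2_scal in PG.
  replace (hnorm2 (hsub (s n) (s k))) with (hnorm2 (hsub (s k) (s n)))
    by (rewrite !hnorm2_sub, rinner_sym; ring).
  specialize (HN n Hn) as HNn. specialize (HN k Hk) as HNk. lra.
Qed.

Hypothesis HC : closedS S.

Lemma projection_exists x : exists p, S p /\ orth (hsub x p) S.
Proof.
  destruct (distance_infimum x) as [d [Hinf Happ]].
  destruct (choice _ Happ) as [s Hs].
  destruct (cauchy_converges _ (minimizing_sequence_cauchy x d s Hinf Hs)) as [p Hp].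
  assert (Sp : S p) by (apply (HC s p); auto; intro; apply Hs).
  exists p. split; auto. apply best_approximation_orth; auto.
  intros s' Hs'. eapply Rle_trans; [|apply Hinf; exact Hs'].
  assert (Cx : converges (fun n => hsub x (s n)) (hsub x p)) by (apply converges_sub; auto; apply converges_const).
  apply converges_hnorm in Cx. pose proof (CV_mult _ _ _ _ Cx Cx) as Cm. simpl in Cm.
  rewrite hnorm_sq in Cm. apply (limit_le_of_approx _ _ _ Cm). intro n. rewrite hnorm_sq. left; apply Hs.
Qed.

Definition Pr (x : X) : X := epsilon (inhabits x) (fun p => S p /\ orth (hsub x p) S).

Lemma Pr_in x : S (Pr x).
Proof. apply (epsilon_spec (inhabits x) (fun p => S p /\ orth (hsub x p) S)), projection_exists. Qed.

Lemma Pr_orth x : orth (hsub x (Pr x)) S.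
Proof. apply (epsilon_spec (inhabits x) (fun p => S p /\ orth (hsub x p) S)), projection_exists. Qed.

Lemma Pr_char x p : S p -> orth (hsub x p) S -> Pr x = p.
Proof.
  intros Sp Op. apply hsub_eq0. apply (orth_self _ S).
  - replace (hsub (Pr x) p) with (hsub (hsub x p) (hsub x (Pr x))) by hvec_eq.
    apply orth_sub; auto. apply Pr_orth.
  - apply subsp_sub; auto. apply Pr_in.
Qed.

Lemma Pr_id x : S x -> Pr x = x.
Proof. intro. apply Pr_char; auto. rewrite hsub_diag. apply orth_0. Qed.

Lemma Pr_orth_zero x : orth x S -> Pr x = hzero.
Proof. intro. apply Pr_char; [apply subsp0; auto|]. rewrite hsub_0r. auto. Qed.

Lemma Pr_bl : bounded_linear Pr.
Proof.
  split; [|split].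
  - intros x y. apply Pr_char; [apply subsp_add; auto; apply Pr_in|].
    replace (hsub (hadd x y) (hadd (Pr x) (Pr y))) with (hadd (hsub x (Pr x)) (hsub y (Pr y))) by hvec_eq.
    apply orth_add; apply Pr_orth.
  - intros a x. apply Pr_char; [apply subsp_scal; auto; apply Pr_in|].
    rewrite <- hscal_sub. apply orth_scal, Pr_orth.
  - exists 1. intro x. rewrite Rmult_1_l. apply hnorm_le_sq; [apply hnorm_nonneg|]. rewrite hnorm_sq.
    replace x with (hadd (hsub x (Pr x)) (Pr x)) at 2 by hvec_eq.
    rewrite pythagoras by (apply Pr_orth, Pr_in). pose proof (hnorm2_nonneg (hsub x (Pr x))). lra.
Qed.

End Projection.

Arguments Pr {X} S x.

Section KernelImage.
Context {X Y : Hilbert}.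
Variable f : X -> Y.
Hypothesis Hf : bounded_linear f.

Definition kerS : X -> Prop := fun x => f x = hzero.
Definition imS : Y -> Prop := fun y => exists x, f x = y.

Lemma ker_subsp : subsp kerS.
Proof.
  unfold kerS. split; [|split].
  - apply (bl_zero f Hf).
  - intros x y Ex Ey. rewrite (bl_add f Hf), Ex, Ey. apply hadd_0.
  - intros a x Ex. rewrite (bl_scal f Hf), Ex. apply hscal_0r.
Qed.

Lemma im_subsp : subsp imS.
Proof.
  unfold imS. split; [|split].
  - exists hzero. apply (bl_zero f Hf).
  - intros a b [x <-] [y <-]. exists (hadd x y). apply (bl_add f Hf).
  - intros c a [x <-]. exists (hscal c x). apply (bl_scal f Hf).
Qed.

Lemma ker_closed : closedS kerS.
Proof.
  intros u l Hu Cu. unfold kerS. apply (bl_converges f Hf) in Cu.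
  eapply converges_unique; [exact Cu|].
  replace (fun m => f (u m)) with (fun _ : nat => @hzero Y)
    by (apply functional_extensionality; intro; symmetry; apply Hu).
  apply converges_const.
Qed.

Lemma orth_im_iff (f' : Y -> X) y : is_adjoint f f' -> (orth y imS <-> f' y = hzero).
Proof.
  intro Hadj. split.
  - intro Hy. apply hnorm2_eq0. unfold hnorm2. rewrite <- Hadj.
    rewrite (hinner_C0_sym _ _ (Hy _ (ex_intro _ (f' y) eq_refl))). reflexivity.
  - intros E s [x <-]. apply hinner_C0_sym. rewrite Hadj, E. apply hinner_0r.
Qed.

End KernelImage.

Lemma half_pow_pos n : 0 < (/ 2) ^ n.
Proof. apply pow_lt. lra. Qed.

Lemma Un_cv_half_pow c : Un_cv (fun n => c * (/ 2) ^ n) 0.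
Proof.
  intros e He. destruct (half_pow_small (e / (Rabs c + 1))) as [N HN].
  { apply Rdiv_lt_0_compat; [lra|]. pose proof (Rabs_pos c); lra. }
  exists N. intros n Hn. unfold R_dist. rewrite Rminus_0_r, Rabs_mult, (Rabs_right ((/ 2) ^ n))
    by (apply Rle_ge; left; apply half_pow_pos).
  specialize (HN n Hn). pose proof (Rabs_pos c). pose proof (half_pow_pos n).
  apply Rmult_lt_compat_l with (r := Rabs c + 1) in HN; [|lra].
  replace ((Rabs c + 1) * (e / (Rabs c + 1))) with e in HN by (field; lra). nra.
Qed.

Section Series.
Context {X : Hilbert}.

Fixpoint partial_sum (x : nat -> X) (n : nat) : X :=
  match n with O => hzero | S n => hadd (partial_sum x n) (x n) end.

Lemma partial_sum_geometric_bound (x : nat -> X) c :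
  (forall k, hnorm (x k) <= c * (/ 2) ^ k) ->
  forall k m, (k <= m)%nat -> hnorm (hsub (partial_sum x m) (partial_sum x k)) <= 2 * c * ((/ 2) ^ k - (/ 2) ^ m).
Proof.
  intros Hx k m Hkm. induction Hkm.
  - rewrite hsub_diag, hnorm_0. lra.
  - replace (hsub (partial_sum x (S m)) (partial_sum x k)) with (hadd (hsub (partial_sum x m) (partial_sum x k)) (x m))
      by (simpl; hvec_eq).
    pose proof (hnorm_triangle (hsub (partial_sum x m) (partial_sum x k)) (x m)). pose proof (Hx m).
    simpl. lra.
Qed.

Lemma geometric_series_converges (x : nat -> X) c :
  (forall k, hnorm (x k) <= c * (/ 2) ^ k) -> exists l, converges (partial_sum x) l /\ hnorm l <= 2 * c.
Proof.
  intro Hx. pose proof (partial_sum_geometric_bound x c Hx) as Hs.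
  assert (Hc : 0 <= c) by (pose proof (Hx O) as H0; pose proof (hnorm_nonneg (x O)); simpl in H0; lra).
  assert (Hcau : cauchy (partial_sum x)).
  { intros e He. destruct (Un_cv_half_pow (2 * c) e He) as [N HN]. exists N.
    assert (Hle : forall a b, (N <= a)%nat -> (a <= b)%nat -> hnorm (hsub (partial_sum x b) (partial_sum x a)) < e).
    { intros a b Ha Hab. specialize (HN a Ha). unfold R_dist in HN. rewrite Rminus_0_r in HN.
      apply Rabs_def2 in HN. pose proof (Hs a b Hab). pose proof (half_pow_pos b). nra. }
    intros m k Hm Hk. destruct (Nat.le_ge_cases k m).
    - apply Hle; auto.
    - rewrite hnorm_sub_sym. apply Hle; auto. }
  destruct (cauchy_converges _ Hcau) as [l Hl]. exists l. split; auto.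
  apply (hnorm_limit_le _ _ _ Hl). intro m. pose proof (Hs O m ltac:(lia)) as H0.
  simpl in H0. rewrite hsub_0r in H0. pose proof (half_pow_pos m). nra.
Qed.

End Series.

Section OpenMapping.
Context {X Y : Hilbert}.
Variable T : X -> Y.
Hypothesis HT : bounded_linear T.
Hypothesis Hcl : closedS (imS T).

Definition approx_image_of_ball (n : nat) (y : Y) : Prop :=
  forall eps, 0 < eps -> exists x, hnorm x <= INR n /\ hnorm (hsub (T x) y) < eps.

Lemma nested_balls_limit (c : nat -> Y) (r : nat -> R) :
  (forall k, imS T (c k)) -> (forall k, 0 <= r k <= (/ 2) ^ k) ->
  (forall k m, (k <= m)%nat -> hnorm (hsub (c m) (c k)) + r m <= r k) ->
  exists l, imS T l /\ forall k, hnorm (hsub l (c k)) <= r k.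
Proof.
  intros Hc Hr Hnest.
  assert (Hrpos : forall k, 0 <= r k) by apply Hr.
  assert (Hcau : cauchy c).
  { intros e He. destruct (half_pow_small e He) as [N HN]. exists N. intros m k Hm Hk.
    destruct (Nat.le_ge_cases k m) as [Hkm|Hkm].
    - pose proof (Hnest k m Hkm). pose proof (Hrpos m). pose proof (Hr k). specialize (HN k Hk). lra.
    - pose proof (Hnest m k Hkm). pose proof (Hrpos k). pose proof (Hr m). specialize (HN m Hm).
      rewrite hnorm_sub_sym. lra. }
  destruct (cauchy_converges _ Hcau) as [l Hl]. exists l. split; [apply (Hcl c l); auto|].
  intro k. assert (Cv : converges (fun m => hsub (c (m + k)%nat) (c k)) (hsub l (c k)))
    by (apply converges_sub; [apply converges_shift; auto | apply converges_const]).
  apply (hnorm_limit_le _ _ _ Cv). intro m. pose proof (Hnest k (m + k)%nat ltac:(lia)).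
  pose proof (Hrpos (m + k)%nat). lra.
Qed.

Lemma shrink_ball_avoiding n c r y :
  imS T y -> hnorm (hsub y c) < r -> ~ approx_image_of_ball n y ->
  exists r', 0 < r' /\ r' <= r / 2 /\ hnorm (hsub y c) + r' <= r /\
    forall z, hnorm (hsub z y) <= r' -> ~ approx_image_of_ball n z.
Proof.
  intros Hy Hyc HF.
  assert (He : exists e, 0 < e /\ forall x, hnorm x <= INR n -> e <= hnorm (hsub (T x) y)).
  { apply NNPP. intro Hn. apply HF. intros e He. apply NNPP. intro Hn2. apply Hn. exists e. split; auto.
    intros x Hx. apply Rnot_lt_le. intro. apply Hn2. exists x. auto. }
  destruct He as [e [He HE]].
  set (r' := Rmin (e / 2) ((r - hnorm (hsub y c)) / 2)).
  pose proof (Rmin_l (e / 2) ((r - hnorm (hsub y c)) / 2)).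
  pose proof (Rmin_r (e / 2) ((r - hnorm (hsub y c)) / 2)).
  pose proof (hnorm_nonneg (hsub y c)).
  exists r'. split; [apply Rmin_glb_lt; lra|]. split; [unfold r'; lra|]. split; [unfold r'; lra|].
  intros z Hz Fz. destruct (Fz (e / 2)) as [x [Hx1 Hx2]]; [lra|].
  pose proof (hdist_triangle (T x) z y). pose proof (HE x Hx1). unfold r' in *. lra.
Qed.

(* Baire category argument: im T is complete, so some approx_image_of_ball n has interior *)
Lemma baire_ball : exists n c r, imS T c /\ 0 < r /\
  forall y, imS T y -> hnorm (hsub y c) < r -> approx_image_of_ball n y.
Proof.
  apply NNPP. intro Hn.
  assert (Step : forall p : nat * (Y * R), exists q : Y * R,
     imS T (fst (snd p)) -> 0 < snd (snd p) ->
     imS T (fst q) /\ 0 < snd q /\ snd q <= snd (snd p) / 2 /\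
     hnorm (hsub (fst q) (fst (snd p))) + snd q <= snd (snd p) /\
     forall z, hnorm (hsub z (fst q)) <= snd q -> ~ approx_image_of_ball (fst p) z).
  { intros [n [c r]]. simpl. destruct (classic (imS T c /\ 0 < r)) as [[Hc Hr]|Hno].
    - assert (exists y, imS T y /\ hnorm (hsub y c) < r /\ ~ approx_image_of_ball n y) as [y [Hy [Hyc HF]]].
      { apply NNPP. intro H2. apply Hn. exists n, c, r. repeat split; auto.
        intros y Hy Hyc. apply NNPP. intro. apply H2. exists y. auto. }
      destruct (shrink_ball_avoiding n c r y Hy Hyc HF) as [r' Hr'].
      exists (y, r'). simpl. tauto.
    - exists (c, r). intros. exfalso; auto. }
  destruct (choice _ Step) as [step Hstep].
  set (cr := fix cr (k : nat) : Y * R := match k with O => (hzero, 1) | S k => step (k, cr k) end).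
  assert (Inv : forall k, imS T (fst (cr k)) /\ 0 < snd (cr k)).
  { induction k as [|k [IH1 IH2]].
    - split; [exists hzero; apply (bl_zero T HT) | simpl; lra].
    - destruct (Hstep (k, cr k)) as [A [B _]]; auto. }
  assert (Hk : forall k, snd (cr (S k)) <= snd (cr k) / 2 /\
     hnorm (hsub (fst (cr (S k))) (fst (cr k))) + snd (cr (S k)) <= snd (cr k) /\
     forall z, hnorm (hsub z (fst (cr (S k)))) <= snd (cr (S k)) -> ~ approx_image_of_ball k z).
  { intro k. destruct (Inv k). destruct (Hstep (k, cr k)) as [_ [_ [A [B C]]]]; auto. }
  set (c := fun k => fst (cr k)). set (r := fun k => snd (cr k)).
  destruct (nested_balls_limit c r) as [l [[x Hx] Hl]].
  - intro k. apply Inv.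
  - induction k as [|k IH]; [unfold r; simpl; lra|]. destruct (Hk k) as [A _]. destruct (Inv (S k)).
    simpl. unfold r in *. lra.
  - intros k m Hkm. induction Hkm; [rewrite hsub_diag, hnorm_0; lra|].
    destruct (Hk m) as [_ [A _]]. pose proof (hdist_triangle (c (S m)) (c m) (c k)). unfold c, r in *. lra.
  - destruct (INR_unbounded (hnorm x)) as [k Hkx].
    apply ((proj2 (proj2 (Hk k))) l (Hl (S k))). intros e He. exists x. split; [lra|].
    rewrite Hx, hsub_diag, hnorm_0. auto.
Qed.

Lemma approx_preimage : exists K, 0 < K /\ forall y, imS T y -> forall eps, 0 < eps ->
  exists x, hnorm x <= K * hnorm y /\ hnorm (hsub (T x) y) < eps.
Proof.
  destruct baire_ball as [n [c [r [Hc [Hr HF]]]]].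
  assert (Small : forall y, imS T y -> hnorm y < r -> forall eps, 0 < eps ->
     exists x, hnorm x <= 2 * INR n /\ hnorm (hsub (T x) y) < eps).
  { intros y Hy Hyr e He.
    assert (F1 : approx_image_of_ball n (hadd c y)).
    { apply HF; [apply im_subsp; auto|]. replace (hsub (hadd c y) c) with y by hvec_eq. auto. }
    assert (F2 : approx_image_of_ball n c) by (apply HF; auto; rewrite hsub_diag, hnorm_0; auto).
    destruct (F1 (e / 2)) as [x1 [A1 B1]]; [lra|]. destruct (F2 (e / 2)) as [x2 [A2 B2]]; [lra|].
    exists (hsub x1 x2). split; [pose proof (hnorm_sub_le x1 x2); lra|].
    rewrite (bl_sub T HT).
    replace (hsub (hsub (T x1) (T x2)) y) with (hsub (hsub (T x1) (hadd c y)) (hsub (T x2) c)) by hvec_eq.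
    pose proof (hnorm_sub_le (hsub (T x1) (hadd c y)) (hsub (T x2) c)). lra. }
  pose proof (pos_INR n).
  exists (4 * INR n / r + 1). split.
  { assert (0 <= 4 * INR n / r) by (apply Rmult_le_pos; [lra | left; apply Rinv_0_lt_compat; lra]). lra. }
  intros y Hy e He. destruct (Req_dec (hnorm y) 0) as [E0|E0].
  - exists hzero. rewrite (bl_zero T HT), hnorm_0, E0. apply hnorm_eq0 in E0. subst.
    rewrite hsub_diag, hnorm_0. lra.
  - (* rescale y into the ball of radius r *)
    pose proof (hnorm_nonneg y). set (t := r / (2 * hnorm y)).
    assert (Ht : 0 < t) by (unfold t; apply Rdiv_lt_0_compat; lra).
    assert (Hit : 0 < / t) by (apply Rinv_0_lt_compat; lra).
    destruct (Small (hscal (RC t) y)) with (eps := e * t) as [x' [A B]].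
    { apply im_subsp; auto. }
    { rewrite hnorm_scal, Rabs_right by lra. unfold t. field_simplify; lra. }
    { nra. }
    exists (hscal (RC (/ t)) x'). split.
    + rewrite hnorm_scal, Rabs_right by lra.
      apply Rle_trans with (/ t * (2 * INR n)); [apply Rmult_le_compat_l; lra|].
      replace (/ t * (2 * INR n)) with (4 * INR n / r * hnorm y) by (unfold t; field; lra). nra.
    + rewrite (bl_scal T HT).
      replace (hsub (hscal (RC (/ t)) (T x')) y) with (hscal (RC (/ t)) (hsub (T x') (hscal (RC t) y)))
        by hvec_eq_field.
      rewrite hnorm_scal, Rabs_right by lra.
      apply Rmult_lt_compat_l with (r := / t) in B; auto.
      replace (/ t * (e * t)) with e in B by (field; lra). exact B.
Qed.

Theorem open_mapping : exists K, 0 < K /\ forall y, imS T y -> exists x, T x = y /\ hnorm x <= K * hnorm y.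
Proof.
  destruct approx_preimage as [K [HK HA]]. exists (2 * K). split; [lra|]. intros y Hy.
  destruct (Req_dec (hnorm y) 0) as [E0|E0].
  { exists hzero. apply hnorm_eq0 in E0. subst. rewrite (bl_zero T HT), !hnorm_0. split; auto. lra. }
  pose proof (hnorm_nonneg y). set (ny := hnorm y).
  assert (Hch : forall p : nat * Y, exists x, imS T (snd p) ->
     hnorm x <= K * hnorm (snd p) /\ hnorm (hsub (T x) (snd p)) < ny * (/ 2) ^ S (fst p)).
  { intros [k z]. simpl. destruct (classic (imS T z)) as [Hz|Hz].
    - destruct (HA z Hz (ny * (/ 2) ^ S k)) as [x Hx].
      { apply Rmult_lt_0_compat; [unfold ny; lra | apply half_pow_pos]. }
      exists x. auto.
    - exists hzero. intro; contradiction. }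
  destruct (choice _ Hch) as [approx Happrox].
  (* z k is the part of y not yet reached after k successive approximations *)
  set (z := fix z (k : nat) : Y := match k with O => y | S k => hsub (z k) (T (approx (k, z k))) end).
  set (x := fun k => approx (k, z k)).
  assert (Hz : forall k, imS T (z k) /\ hnorm (z k) <= ny * (/ 2) ^ k).
  { induction k as [|k [I1 I2]].
    - split; [exact Hy|]. simpl. unfold ny; lra.
    - split; [apply (subsp_sub _ _ _ (im_subsp T HT)); auto; exists (x k); auto|].
      destruct (Happrox (k, z k) I1) as [_ B]. simpl in B. simpl. rewrite hnorm_sub_sym. unfold x. lra. }
  assert (Hx : forall k, hnorm (x k) <= K * ny * (/ 2) ^ k).
  { intro k. destruct (Hz k) as [I1 I2]. destruct (Happrox (k, z k) I1) as [A _]. simpl in A.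
    rewrite Rmult_assoc. eapply Rle_trans; [exact A|]. apply Rmult_le_compat_l; lra. }
  assert (Hsum : forall k, T (partial_sum x k) = hsub y (z k)).
  { induction k as [|k IH]; simpl.
    - rewrite (bl_zero T HT), hsub_diag. reflexivity.
    - change (z (S k)) with (hsub (z k) (T (x k))). rewrite (bl_add T HT), IH. unfold x. hvec_eq. }
  destruct (geometric_series_converges x (K * ny) Hx) as [l [Hl Hln]].
  exists l. split; [|unfold ny in *; lra].
  apply (converges_unique (fun k => T (partial_sum x k))); [apply (bl_converges T HT); auto|].
  apply (converges_dominated _ _ (fun k => ny * (/ 2) ^ k)); [|apply Un_cv_half_pow].
  intro m. rewrite Hsum. replace (hsub (hsub y (z m)) y) with (hopp (z m)) by hvec_eq.
  rewrite hnorm_opp. apply Hz.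
Qed.

Lemma bounded_below : exists c, 0 < c /\ forall v, orth v (kerS T) -> hnorm v <= c * hnorm (T v).
Proof.
  destruct open_mapping as [c [Hc HO]]. exists c. split; auto.
  intros v Hv. destruct (HO (T v)) as [x [Hx1 Hx2]]; [exists v; auto|].
  assert (Hk : kerS T (hsub v x)) by (unfold kerS; rewrite (bl_sub T HT), Hx1; apply hsub_diag).
  pose proof (rinner_C0 _ _ (Hv _ Hk)) as Ho. rewrite rinner_subr in Ho.
  pose proof (cauchy_schwarz v x). pose proof (hnorm_nonneg v). pose proof (hnorm_nonneg x).
  assert (hnorm v * hnorm v <= hnorm v * hnorm x) by (rewrite hnorm_sq; unfold hnorm2; fold (rinner v v); lra).
  assert (hnorm v <= hnorm x) by (destruct (Req_dec (hnorm v) 0); nra).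
  lra.
Qed.

End OpenMapping.

Lemma le_of_sq_le_mul a b k : 0 <= a -> 0 <= b -> 0 <= k -> a * a <= k * (b * a) -> a <= k * b.
Proof. intros Ha Hb Hk H. destruct (Req_dec a 0) as [->|Ha0]; [nra|]. nra. Qed.

Section ClosedImage.
Context {X Y : Hilbert}.
Variable T : X -> Y.
Hypothesis HT : bounded_linear T.

Lemma image_closed_of_bounded_below (Zs N : X -> Prop) c : 0 < c ->
  subsp Zs -> closedS Zs -> subsp N -> closedS N -> (forall v, N v -> Zs v /\ T v = hzero) ->
  (forall z, Zs z -> orth z N -> hnorm z <= c * hnorm (T z)) ->
  closedS (fun y => exists z, Zs z /\ T z = y).
Proof.
  intros Hc SZ CZ SN CN HN Bc u l Hu Cu. destruct (choice _ Hu) as [x Hx].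
  set (x' := fun k => hsub (x k) (Pr N (x k))).
  assert (Zx' : forall k, Zs (x' k)) by (intro; apply subsp_sub; auto; [apply Hx | apply HN, Pr_in; auto]).
  assert (Tx' : forall k, T (x' k) = u k).
  { intro k. unfold x'. rewrite (bl_sub T HT), (proj2 (HN _ (Pr_in N SN CN (x k)))), hsub_0r. apply Hx. }
  assert (Ox' : forall k, orth (x' k) N) by (intro; apply Pr_orth; auto).
  assert (Hcau : cauchy x').
  { intros e He. destruct (Cu (e / (2 * c))) as [N0 HN0]; [apply Rdiv_lt_0_compat; lra|].
    exists N0. intros m k Hm Hk. pose proof (HN0 m Hm) as H1. pose proof (HN0 k Hk) as H2.
    unfold hdist in H1, H2. fold (hsub (u m) l) (hsub (u k) l) in H1, H2.
    pose proof (Bc (hsub (x' m) (x' k)) (subsp_sub _ _ _ SZ (Zx' m) (Zx' k)) (orth_sub _ _ _ (Ox' m) (Ox' k))) as B.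
    rewrite (bl_sub T HT), !Tx' in B.
    pose proof (hdist_triangle (u m) l (u k)). rewrite (hnorm_sub_sym l (u k)) in H.
    pose proof (hnorm_nonneg (hsub (u m) (u k))).
    apply Rle_lt_trans with (c * hnorm (hsub (u m) (u k))); [nra|].
    apply Rlt_le_trans with (c * (e / (2 * c) + e / (2 * c))); [apply Rmult_lt_compat_l; lra|].
    right; field; lra. }
  destruct (cauchy_converges _ Hcau) as [xl Hxl]. exists xl. split; [apply (CZ x'); auto|].
  apply (converges_unique (fun k => T (x' k))); [apply (bl_converges T HT); auto|].
  replace (fun k => T (x' k)) with u; auto. apply functional_extensionality; intro; symmetry; auto.
Qed.

End ClosedImage.

Lemma image_bounded_by_adjoint {X Y : Hilbert} (a : X -> Y) (a' : Y -> X) :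
  bounded_linear a -> is_adjoint a a' -> closedS (imS a) ->
  exists c, 0 < c /\ forall v, imS a v -> hnorm v <= c * hnorm (a' v).
Proof.
  intros Ha Aa Cla. destruct (open_mapping a Ha Cla) as [c [Hc Oa]]. exists c. split; auto.
  intros v Hv. destruct (Oa v Hv) as [x [Hx1 Hx2]].
  (* |v|^2 = <a x, v> = <x, a' v> <= |x| |a' v| <= c |v| |a' v| *)
  assert (E : hnorm v * hnorm v = rinner x (a' v)).
  { rewrite hnorm_sq. unfold hnorm2, rinner. rewrite <- Aa, Hx1. reflexivity. }
  pose proof (cauchy_schwarz x (a' v)). pose proof (hnorm_nonneg v). pose proof (hnorm_nonneg (a' v)).
  pose proof (hnorm_nonneg x). apply le_of_sq_le_mul; try lra. nra.
Qed.

Section HodgeLaplacian.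
Context {E0 E1 E2 : Hilbert}.
Variables (a : E0 -> E1) (a' : E1 -> E0) (b : E1 -> E2) (b' : E2 -> E1).
Hypotheses (Ha : bounded_linear a) (Ha' : bounded_linear a') (Hb : bounded_linear b) (Hb' : bounded_linear b').
Hypotheses (Aa : is_adjoint a a') (Ab : is_adjoint b b').

Definition hodge_lap : E1 -> E1 := oadd (ocomp a a') (ocomp b' b).

Lemma hodge_lap_bl : bounded_linear hodge_lap.
Proof. apply bl_oadd; apply bl_comp; auto. Qed.

Lemma hodge_lap_selfadjoint : is_adjoint hodge_lap hodge_lap.
Proof.
  intros u v. unfold hodge_lap, oadd, ocomp. rewrite hinner_add, hinner_addr.
  rewrite Aa, <- Ab, (hinner_conj v (b' (b u))), <- Ab, (hinner_conj (a (a' v)) u), Aa.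
  rewrite (hinner_conj (a' u) (a' v)), (hinner_conj (b v) (b u)).
  apply Ceq; simpl; ring.
Qed.

Lemma hodge_lap_rinner v : rinner (hodge_lap v) v = hnorm2 (a' v) + hnorm2 (b v).
Proof.
  unfold hodge_lap, oadd, ocomp. rewrite rinner_addl. unfold rinner, hnorm2.
  rewrite Aa, (hinner_conj v (b' (b v))), <- Ab. reflexivity.
Qed.

Lemma hodge_lap_ker v : hodge_lap v = hzero <-> a' v = hzero /\ b v = hzero.
Proof.
  split.
  - intro E. pose proof (hodge_lap_rinner v) as R. rewrite E, rinner_0l in R.
    pose proof (hnorm2_nonneg (a' v)); pose proof (hnorm2_nonneg (b v)).
    split; apply hnorm2_eq0; lra.
  - intros [E1' E2']. unfold hodge_lap, oadd, ocomp.
    rewrite E1', E2', (bl_zero a Ha), (bl_zero b' Hb'). apply hadd_0.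
Qed.

Hypothesis Hba : forall x, b (a x) = hzero.
Hypotheses (Cla : closedS (imS a)) (Clb : closedS (imS b)).

Lemma orth_hodge_ker_split v : orth v (kerS hodge_lap) ->
  exists v1 v3, v = hadd v1 v3 /\ imS a v1 /\ orth v3 (kerS b).
Proof.
  intro Hv.
  assert (Sa : subsp (imS a)) by (apply im_subsp; auto).
  assert (Sk : subsp (kerS b)) by (apply ker_subsp; auto).
  assert (Ck : closedS (kerS b)) by (apply ker_closed; auto).
  set (w := Pr (kerS b) v). set (v1 := Pr (imS a) w). set (v2 := hsub w v1).
  assert (Hw : kerS b w) by (apply Pr_in; auto).
  assert (Hv1 : imS a v1) by (apply Pr_in; auto).
  assert (Hv2 : orth v2 (imS a)) by (apply Pr_orth; auto).
  assert (Hv3 : orth (hsub v w) (kerS b)) by (apply Pr_orth; auto).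
  assert (K2 : kerS b v2) by (apply subsp_sub; auto; destruct Hv1 as [x <-]; apply Hba).
  (* v2 lies in ker a' /\ ker b = ker hodge_lap, and is orthogonal to v - v2 *)
  assert (D2 : kerS hodge_lap v2) by (apply hodge_lap_ker; split; auto; apply (orth_im_iff a a'); auto).
  assert (Z2 : v2 = hzero).
  { apply hnorm2_eq0. pose proof (rinner_C0 _ _ (Hv v2 D2)) as R.
    replace v with (hadd (hadd v1 v2) (hsub v w)) in R by (unfold v2; hvec_eq).
    rewrite !rinner_addl in R.
    pose proof (rinner_C0 _ _ (hinner_C0_sym _ _ (Hv2 v1 Hv1))).
    pose proof (rinner_C0 _ _ (Hv3 v2 K2)). unfold hnorm2. fold (rinner v2 v2). lra. }
  exists v1, (hsub v w). split; auto.
  replace w with (hadd v1 v2) by (unfold v2; hvec_eq). rewrite Z2. hvec_eq.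
Qed.

Lemma hodge_lap_bounded_below : exists c, 0 < c /\
  forall v, orth v (kerS hodge_lap) -> hnorm v <= c * hnorm (hodge_lap v).
Proof.
  destruct (bounded_below b Hb Clb) as [cb [Pcb Bb]].
  destruct (image_bounded_by_adjoint a a' Ha Aa Cla) as [ca [Pca Ba]].
  exists (2 * (ca * ca + cb * cb)). split; [nra|].
  intros v Hv. destruct (orth_hodge_ker_split v Hv) as [v1 [v3 [Ev [Hv1 Hv3]]]].
  assert (A3 : a' v3 = hzero).
  { apply (orth_im_iff a a'); auto. intros s [x <-]. apply Hv3, Hba. }
  assert (K1 : b v1 = hzero) by (destruct Hv1 as [x <-]; apply Hba).
  assert (Eav : a' v = a' v1) by (rewrite Ev, (bl_add a' Ha'), A3, hadd_0r; reflexivity).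
  assert (Ebv : b v = b v3) by (rewrite Ev, (bl_add b Hb), K1, hadd_0; reflexivity).
  pose proof (Ba v1 Hv1) as B1. pose proof (Bb v3 Hv3) as B3.
  pose proof (hodge_lap_rinner v) as DR. rewrite Eav, Ebv in DR.
  pose proof (cauchy_schwarz (hodge_lap v) v) as CS.
  rewrite <- !hnorm_sq in DR. pose proof (hnorm_nonneg v1). pose proof (hnorm_nonneg v3).
  pose proof (hnorm_nonneg (a' v1)). pose proof (hnorm_nonneg (b v3)).
  assert (Q : hnorm v * hnorm v <= 2 * (hnorm v1 * hnorm v1) + 2 * (hnorm v3 * hnorm v3)).
  { rewrite !hnorm_sq, Ev, hnorm2_add. pose proof (hnorm2_nonneg (hsub v1 v3)). rewrite hnorm2_sub in H3. lra. }
  apply le_of_sq_le_mul; [apply hnorm_nonneg | apply hnorm_nonneg | nra |].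
  assert (hnorm v1 * hnorm v1 <= ca * ca * (hnorm (a' v1) * hnorm (a' v1))) by nra.
  assert (hnorm v3 * hnorm v3 <= cb * cb * (hnorm (b v3) * hnorm (b v3))) by nra.
  assert (0 <= ca * ca * (hnorm (b v3) * hnorm (b v3))) by nra.
  assert (0 <= cb * cb * (hnorm (a' v1) * hnorm (a' v1))) by nra.
  nra.
Qed.

Lemma hodge_lap_image_closed : closedS (imS hodge_lap).
Proof.
  destruct hodge_lap_bounded_below as [c [Pc Bc]].
  apply (closed_ext _ (fun y => exists z, True /\ hodge_lap z = y)).
  { intro y. split; [intros [z Hz]; exists z; auto | intros [z [_ Hz]]; exists z; auto]. }
  apply (image_closed_of_bounded_below hodge_lap hodge_lap_bl _ (kerS hodge_lap) c); auto.
  - split; [|split]; auto.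
  - intros u l _ _. exact I.
  - apply ker_subsp, hodge_lap_bl.
  - apply ker_closed, hodge_lap_bl.
Qed.

Lemma hodge_decomposition y : exists x r, y = hadd (hodge_lap x) r /\ hodge_lap r = hzero.
Proof.
  assert (SI : subsp (imS hodge_lap)) by (apply im_subsp, hodge_lap_bl).
  destruct (Pr_in (imS hodge_lap) SI hodge_lap_image_closed y) as [x Hx].
  exists x, (hsub y (Pr (imS hodge_lap) y)). split; [rewrite Hx; hvec_eq|].
  apply (orth_im_iff hodge_lap hodge_lap _ hodge_lap_selfadjoint).
  apply Pr_orth; auto. apply hodge_lap_image_closed.
Qed.

End HodgeLaplacian.

Fixpoint cadd (cs ds : list C) : list C :=
  match cs, ds with
  | c :: cs', d :: ds' => Cadd c d :: cadd cs' ds'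
  | [], _ => ds
  | _, [] => cs
  end.

Section LinearCombinations.
Context {X : Hilbert}.

Lemma lincomb_nil_l (ws : list X) : lincomb [] ws = hzero.
Proof. destruct ws; reflexivity. Qed.

Lemma lincomb_nil_r (cs : list C) : lincomb cs (@nil X) = hzero.
Proof. destruct cs; reflexivity. Qed.

Lemma lincomb_cadd (cs ds : list C) (ws : list X) :
  lincomb (cadd cs ds) ws = hadd (lincomb cs ws) (lincomb ds ws).
Proof.
  revert cs ds. induction ws as [|w ws IH]; intros cs ds.
  - destruct cs, ds; simpl; rewrite ?hadd_0; reflexivity.
  - destruct cs as [|c cs], ds as [|d ds]; simpl; rewrite ?hadd_0, ?hadd_0r; try reflexivity.
    rewrite IH, hscal_addl. hvec_eq.
Qed.

Lemma lincomb_scal a (cs : list C) (ws : list X) :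
  lincomb (map (Cmul a) cs) ws = hscal a (lincomb cs ws).
Proof.
  revert cs. induction ws as [|w ws IH]; intros cs.
  - destruct cs; simpl; rewrite hscal_0r; reflexivity.
  - destruct cs as [|c cs]; simpl; [rewrite hscal_0r; reflexivity|].
    rewrite IH, hscal_addr, hscal_assoc. reflexivity.
Qed.

Lemma lincomb_in (S : X -> Prop) (cs : list C) ws : subsp S -> (forall w, In w ws -> S w) -> S (lincomb cs ws).
Proof.
  intros HS. revert cs. induction ws as [|w ws IH]; intros cs Hw.
  - destruct cs; simpl; apply subsp0; auto.
  - destruct cs as [|c cs]; simpl; [apply subsp0; auto|].
    apply subsp_add, IH; auto; [apply subsp_scal, Hw; simpl; auto | intros; apply Hw; simpl; auto].
Qed.

Definition spanS (ws : list X) : X -> Prop := fun v => exists cs, v = lincomb cs ws.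

End LinearCombinations.

Lemma bl_lincomb {X Y : Hilbert} (f : X -> Y) (cs : list C) (ws : list X) :
  bounded_linear f -> f (lincomb cs ws) = lincomb cs (map f ws).
Proof.
  intro Hf. revert cs. induction ws as [|w ws IH]; intros cs.
  - destruct cs; simpl; apply (bl_zero f Hf).
  - destruct cs as [|c cs]; simpl; [apply (bl_zero f Hf)|].
    rewrite (bl_add f Hf), (bl_scal f Hf), IH. reflexivity.
Qed.

Lemma Pr_line_complement {X : Hilbert} (e y : X) : hinner e e = C1 ->
  Pr (orthc (fun s => s = e)) y = hsub y (hscal (hinner y e) e).
Proof.
  intro Ee. apply Pr_char; [apply orthc_subsp | apply orthc_closed | |].
  - intros s ->. unfold hsub. rewrite hinner_add, hinner_oppl, hinner_scal, Ee. apply Ceq; simpl; ring.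
  - replace (hsub y (hsub y (hscal (hinner y e) e))) with (hscal (hinner y e) e) by hvec_eq.
    intros s Hs. rewrite hinner_scal, (hinner_C0_sym _ _ (Hs e eq_refl)). apply Ceq; simpl; ring.
Qed.

Section ClosedRange.
Context {X Y : Hilbert}.

Lemma line_projection_ker (T : X -> Y) (e : Y) :
  bounded_linear T -> hinner e e = C1 -> ~ imS T e ->
  forall x, Pr (orthc (fun s => s = e)) (T x) = hzero -> T x = hzero.
Proof.
  intros HT Ee NI x Px. rewrite Pr_line_complement in Px by auto. apply hsub_eq0 in Px.
  destruct (classic (hinner (T x) e = C0)) as [E0|E0]; [rewrite Px, E0; apply hscal_0l|].
  exfalso. apply NI. set (c := hinner (T x) e) in *.
  assert (Hc : Cre c * Cre c + Cim c * Cim c <> 0) by (intro; apply E0; apply Ceq; simpl; nra).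
  set (ci := mkC (Cre c / (Cre c * Cre c + Cim c * Cim c)) (- Cim c / (Cre c * Cre c + Cim c * Cim c))).
  exists (hscal ci x). rewrite (bl_scal T HT), Px, hscal_assoc.
  transitivity (hscal C1 e); [f_equal; apply Ceq; unfold ci, C1; simpl; field; auto | apply hscal_1].
Qed.

(* A limit of T x_m is first reached modulo e; the defect along e then vanishes because
   e is not in the image. *)
Lemma image_closed_of_line_projection (T : X -> Y) (e : Y) :
  bounded_linear T -> hinner e e = C1 -> ~ imS T e ->
  closedS (imS (ocomp (Pr (orthc (fun s => s = e))) T)) -> closedS (imS T).
Proof.
  intros HT Ee NI Cl'. set (P := Pr (orthc (fun s => s = e))). set (T' := ocomp P T).
  assert (HP : bounded_linear P) by (apply Pr_bl; [apply orthc_subsp | apply orthc_closed]).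
  assert (HT' : bounded_linear T') by (apply bl_comp; auto).
  pose proof (line_projection_ker T e HT Ee NI) as Line. fold P in Line.
  intros u l Hu Cu. destruct (choice _ Hu) as [xs Hxs].
  destruct (Cl' (fun m => P (u m)) (P l)) as [x0 Hx0].
  { intro m. exists (xs m). unfold T', ocomp. rewrite Hxs. auto. }
  { apply (bl_converges P HP); auto. }
  change (P (T x0) = P l) in Hx0.
  destruct (open_mapping T' HT' Cl') as [K [HK HOM]].
  destruct (choice (fun m x' => T' x' = T' (hsub (xs m) x0) /\ hnorm x' <= K * hnorm (T' (hsub (xs m) x0))))
    as [xp Hxp]; [intro m; apply HOM; eexists; eauto|].
  assert (Eu : forall m, u m = hadd (T x0) (T (xp m))).
  { intro m. assert (Z0 : T (hsub (hsub (xs m) x0) (xp m)) = hzero).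
    { apply Line. change (T' (hsub (hsub (xs m) x0) (xp m)) = hzero).
      rewrite (bl_sub T' HT'), (proj1 (Hxp m)). apply hsub_diag. }
    rewrite !(bl_sub T HT), Hxs in Z0. apply hsub_eq0 in Z0. apply hsub_eq0. rewrite <- Z0. hvec_eq. }
  assert (Cxp : converges xp hzero).
  { apply (converges_dominated _ _ (fun m => K * hnorm (hsub (P (u m)) (P l)))).
    - intro m. rewrite hsub_0r. destruct (Hxp m) as [_ B]. unfold T', ocomp in B.
      rewrite (bl_sub T HT), (bl_sub P HP), Hxs, Hx0 in B. exact B.
    - intros e' He'. destruct ((bl_converges P HP u l Cu) (e' / K)) as [N HN]; [apply Rdiv_lt_0_compat; lra|].
      exists N. intros n Hn. specialize (HN n Hn). unfold hdist in HN. fold (hsub (P (u n)) (P l)) in HN.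
      unfold R_dist. rewrite Rminus_0_r, Rabs_right by (apply Rle_ge, Rmult_le_pos; [lra | apply hnorm_nonneg]).
      apply Rmult_lt_compat_l with (r := K) in HN; auto.
      replace (K * (e' / K)) with e' in HN by (field; lra). exact HN. }
  exists x0. apply (converges_unique u); auto.
  replace u with (fun m => hadd (T x0) (T (xp m))) by (apply functional_extensionality; intro; symmetry; auto).
  assert (Cv : converges (fun m => hadd (T x0) (T (xp m))) (hadd (T x0) (T hzero)))
    by (apply converges_add; [apply converges_const | apply (bl_converges T HT); auto]).
  rewrite (bl_zero T HT), hadd_0r in Cv. exact Cv.
Qed.

Definition covered_by (T : X -> Y) (Z : Y -> Prop) (ws : list Y) : Prop :=
  forall z, Z z -> exists x cs, z = hadd (T x) (lincomb cs ws).

Lemma covered_by_redundant (T : X -> Y) (Z : Y -> Prop) w ws x0 d0 :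
  bounded_linear T -> w = hadd (T x0) (lincomb d0 ws) -> covered_by T Z (w :: ws) -> covered_by T Z ws.
Proof.
  intros HT Ew Hcov z Hz. destruct (Hcov z Hz) as [x [[|c cs] Ez]]; [exists x, []; rewrite Ez; reflexivity|].
  exists (hadd x (hscal c x0)), (cadd (map (Cmul c) d0) cs). rewrite Ez. simpl. rewrite Ew.
  rewrite lincomb_cadd, lincomb_scal, (bl_add T HT), (bl_scal T HT). hvec_eq.
Qed.

Lemma covered_by_projection (T : X -> Y) (Z E : Y -> Prop) w ws :
  subsp E -> closedS E -> Pr E w = hzero ->
  covered_by T Z (w :: ws) -> covered_by (ocomp (Pr E) T) (fun v => Z v /\ E v) (map (Pr E) ws).
Proof.
  intros SE CE Pw Hcov z [Hz Ez]. pose proof (Pr_bl E SE CE) as HP.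
  destruct (Hcov z Hz) as [x [cs Ezx]]. rewrite <- (Pr_id E SE CE z Ez). exists x. rewrite Ezx.
  unfold ocomp. destruct cs as [|c cs]; simpl.
  - exists []. simpl. rewrite !hadd_0r. reflexivity.
  - exists cs. rewrite (bl_add _ HP), (bl_add _ HP), (bl_scal _ HP), Pw, hscal_0r, hadd_0, (bl_lincomb _ cs ws HP).
    reflexivity.
Qed.

Lemma image_closed_of_finite_codim (ws : list Y) (T : X -> Y) (Z : Y -> Prop) :
  bounded_linear T -> subsp Z -> closedS Z -> (forall x, Z (T x)) -> (forall w, In w ws -> Z w) ->
  covered_by T Z ws -> closedS (imS T).
Proof.
  remember (length ws) as n eqn:Hn. revert ws T Z Hn.
  induction n as [|n IH]; intros ws T Z Hn HT SZ CZ HTZ Hws Hcov.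
  { destruct ws; [|discriminate]. intros u l Hu Cu.
    assert (Zl : Z l) by (apply (CZ u); auto; intro m; destruct (Hu m) as [x <-]; auto).
    destruct (Hcov l Zl) as [x [cs E]]. exists x. rewrite E, lincomb_nil_r, hadd_0r. reflexivity. }
  destruct ws as [|w ws]; [discriminate|]. injection Hn as Hn.
  destruct (classic (exists x cs, w = hadd (T x) (lincomb cs ws))) as [[x0 [d0 Ew]]|NB].
  { apply (IH ws T Z); auto; [intros; apply Hws; simpl; auto | apply (covered_by_redundant T Z w ws x0 d0); auto]. }
  (* w is independent of im T + span ws: pass to the orthogonal complement of w *)
  assert (Pw : 0 < hnorm w).
  { pose proof (hnorm_nonneg w). destruct (Req_dec (hnorm w) 0) as [E|]; [|lra].
    exfalso. apply NB. apply hnorm_eq0 in E. subst.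
    exists hzero, []. rewrite (bl_zero T HT), lincomb_nil_l, hadd_0. auto. }
  set (e := hscal (RC (/ hnorm w)) w).
  assert (Ee : hinner e e = C1).
  { apply Ceq; [|apply hinner_pos]. change (hnorm2 e = 1). unfold e. rewrite hnorm2_scal, <- hnorm_sq. field. lra. }
  assert (Hwe : w = hscal (RC (hnorm w)) e).
  { unfold e. rewrite hscal_assoc. rewrite <- (hscal_1 w) at 1. f_equal. apply Ceq; unfold RC, C1; simpl; field; lra. }
  set (E := orthc (fun s => s = e)). set (P := Pr E).
  assert (SE : subsp E) by apply orthc_subsp. assert (CE : closedS E) by apply orthc_closed.
  assert (PZ : forall y, Z y -> Z (P y)).
  { intros y Hy. unfold P, E. rewrite Pr_line_complement by auto.
    apply subsp_sub, subsp_scal; auto. unfold e. apply subsp_scal; auto. apply Hws; simpl; auto. }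
  apply (image_closed_of_line_projection T e HT Ee).
  { intros [x Hx]. apply NB. exists (hscal (RC (hnorm w)) x), [].
    rewrite (bl_scal T HT), Hx, lincomb_nil_l, hadd_0r. auto. }
  apply (IH (map P ws) _ (fun v => Z v /\ E v)).
  - rewrite length_map; auto.
  - apply bl_comp, Pr_bl; auto.
  - apply subsp_inter; auto.
  - apply closed_inter; auto.
  - intro x. unfold ocomp. split; [apply PZ, HTZ | apply Pr_in; auto].
  - intros v Hv. apply in_map_iff in Hv. destruct Hv as [y [<- Hy]].
    split; [apply PZ, Hws; simpl; auto | apply Pr_in; auto].
  - apply (covered_by_projection T Z E w ws SE CE); auto.
    apply Pr_orth_zero; auto. intros s Hs.
    rewrite Hwe, hinner_scal, (hinner_C0_sym _ _ (Hs e eq_refl)). apply Ceq; simpl; ring.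
Qed.

End ClosedRange.

Lemma strictly_increasing_ge (phi : nat -> nat) : (forall m, (phi m < phi (S m))%nat) -> forall m, (m <= phi m)%nat.
Proof. intros H m. induction m; [lia|]. specialize (H m). lia. Qed.

Lemma strictly_increasing_inj (phi : nat -> nat) : (forall m, (phi m < phi (S m))%nat) ->
  forall a b, a <> b -> phi a <> phi b.
Proof.
  intros H. assert (Mono : forall a b, (a < b)%nat -> (phi a < phi b)%nat).
  { intros a b Hab. induction Hab; [apply H|]. specialize (H m). lia. }
  intros a b Hab. destruct (Nat.lt_total a b) as [Hl|[He|Hg]]; [specialize (Mono a b Hl) | | specialize (Mono b a Hg)]; lia.
Qed.

Lemma converges_subseq {X : Hilbert} (u : nat -> X) l (phi : nat -> nat) :
  (forall m, (phi m < phi (S m))%nat) -> converges u l -> converges (fun m => u (phi m)) l.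
Proof.
  intros Hphi Cu e He. destruct (Cu e He) as [N HN]. exists N. intros m Hm.
  apply HN. pose proof (strictly_increasing_ge phi Hphi m). lia.
Qed.

Section Orthonormal.
Context {X : Hilbert}.
Variable V : X -> Prop.
Hypothesis HS : subsp V.

Fixpoint orthonormal_in (L : list X) : Prop :=
  match L with
  | [] => True
  | x :: L' => orthonormal_in L' /\ V x /\ hinner x x = C1 /\ forall y, In y L' -> hinner x y = C0
  end.

Definition list_proj (L : list X) (v : X) : X := lincomb (map (fun e => hinner v e) L) L.

Lemma list_proj_inner L v : orthonormal_in L -> forall y, In y L -> hinner (list_proj L v) y = hinner v y.
Proof.
  induction L as [|x L IH]; intros HL y Hy; [destruct Hy|].
  destruct HL as [HL [Sx [Hxx Hxo]]]. unfold list_proj in *. simpl. rewrite hinner_add, hinner_scal.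
  destruct Hy as [<-|Hy].
  - rewrite Hxx. assert (hinner (lincomb (map (fun e => hinner v e) L) L) x = C0) as ->.
    { assert (Ho : forall y, In y L -> hinner y x = C0) by (intros; apply hinner_C0_sym; auto).
      clear IH Hxo HL. generalize (map (fun e => hinner v e) L) as cs. revert Ho.
      induction L as [|z L IH2]; intros Ho [|c cs]; try apply hinner_0l.
      simpl. rewrite hinner_add, hinner_scal, Ho, IH2; [apply Ceq; simpl; ring | intros; apply Ho | ]; simpl; auto. }
    apply Ceq; unfold C1; simpl; ring.
  - rewrite IH, Hxo; auto. apply Ceq; simpl; ring.
Qed.

Lemma orthonormal_extend L : orthonormal_in L -> (exists v, V v /\ ~ spanS L v) -> exists e, orthonormal_in (e :: L).
Proof.
  intros HL [v [Sv Nv]]. set (r := hsub v (list_proj L v)).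
  assert (Sr : V r).
  { apply subsp_sub; auto. unfold list_proj. apply lincomb_in; auto. clear -HL. induction L as [|x L IH]; intros w Hw; [destruct Hw|].
    destruct HL as [HL [Sx _]]. destruct Hw as [<-|Hw]; auto. }
  assert (Or : forall y, In y L -> hinner r y = C0).
  { intros y Hy. unfold r, hsub. rewrite hinner_add, hinner_oppl, list_proj_inner; auto. apply Ceq; simpl; ring. }
  assert (Pr0 : 0 < hnorm r).
  { pose proof (hnorm_nonneg r). destruct (Req_dec (hnorm r) 0) as [E|]; [|lra]. exfalso. apply Nv.
    apply hnorm_eq0, hsub_eq0 in E. rewrite E. eexists. reflexivity. }
  exists (hscal (RC (/ hnorm r)) r). simpl. split; auto. split; [apply subsp_scal; auto|]. split.
  - apply Ceq; [|apply hinner_pos]. change (hnorm2 (hscal (RC (/ hnorm r)) r) = 1).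
    rewrite hnorm2_scal, <- hnorm_sq. field. lra.
  - intros y Hy. rewrite hinner_scal, Or; auto. apply Ceq; simpl; ring.
Qed.

Definition orthonormal_seq (e : nat -> X) : Prop :=
  (forall n, V (e n)) /\ (forall n, hinner (e n) (e n) = C1) /\
  (forall n m, n <> m -> hinner (e n) (e m) = C0).

(* Gram-Schmidt *)
Lemma finite_span_or_orthonormal_seq :
  (exists vs, forall v, V v -> spanS vs v) \/ (exists e, orthonormal_seq e).
Proof.
  destruct (classic (exists vs, forall v, V v -> spanS vs v)) as [H|H]; [left; auto|right].
  assert (G : forall L : list X, exists e, orthonormal_in L -> orthonormal_in (e :: L)).
  { intro L. destruct (classic (orthonormal_in L)) as [HL|HL]; [|exists hzero; intro; contradiction].
    destruct (orthonormal_extend L HL) as [e He]; [|exists e; auto].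
    apply NNPP. intro N. apply H. exists L. intros v Sv. apply NNPP. intro. apply N. exists v. auto. }
  destruct (choice _ G) as [g Hg].
  set (lst := fix lst (n : nat) : list X := match n with O => [] | S n => g (lst n) :: lst n end).
  assert (ONn : forall n, orthonormal_in (lst n)) by (induction n; simpl; [exact I | apply Hg; auto]).
  assert (Hin : forall n m, (m < n)%nat -> In (g (lst m)) (lst n))
    by (intros n m Hmn; induction Hmn; simpl; auto).
  assert (Hlt : forall n m, (m < n)%nat -> hinner (g (lst n)) (g (lst m)) = C0).
  { intros n m Hmn. destruct (ONn (S n)) as [_ [_ [_ A]]]. apply A, Hin; auto. }
  exists (fun n => g (lst n)). split; [|split].
  - intro n. apply (ONn (S n)).
  - intro n. apply (ONn (S n)).
  - intros n m Hnm. destruct (Nat.lt_total n m) as [Hl|[He|Hgt]]; [apply hinner_C0_sym, Hlt | contradiction | apply Hlt]; lia.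
Qed.

End Orthonormal.

Lemma hnorm_unit {X : Hilbert} (e : X) : hinner e e = C1 -> hnorm e = 1.
Proof. intro A. unfold hnorm. rewrite A. simpl. apply sqrt_1. Qed.

Section Riesz.
Context {X : Hilbert}.
Variable Z : X -> Prop.
Hypotheses (SZ : subsp Z) (CZ : closedS Z).
Variable K : X -> X.
Hypothesis HK : compact_op K.
Hypothesis KZ : forall z, Z z -> Z (K z).

Definition id_plus_K : X -> X := fun z => hadd z (K z).

Lemma id_plus_K_bl : bounded_linear id_plus_K.
Proof. apply (bl_oadd oid K); [apply bl_id | apply HK]. Qed.

Definition id_plus_K_ker : X -> Prop := fun z => Z z /\ id_plus_K z = hzero.

Lemma id_plus_K_ker_subsp : subsp id_plus_K_ker.
Proof. apply subsp_inter; auto. apply ker_subsp, id_plus_K_bl. Qed.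

Lemma id_plus_K_ker_closed : closedS id_plus_K_ker.
Proof. apply closed_inter; auto. apply ker_closed, id_plus_K_bl. Qed.

(* A subsequence of K z converges to some y; then z = (1 + K) z - K z converges to -y,
   which is a unit vector of Z orthogonal to, and yet inside, the kernel. *)
Lemma no_unit_seq_annihilated (z : nat -> X) :
  (forall n, Z (z n) /\ orth (z n) id_plus_K_ker /\ hnorm (z n) = 1) ->
  converges (fun n => id_plus_K (z n)) hzero -> False.
Proof.
  intros Hz Cz. destruct HK as [_ HC]. destruct (HC z) as [phi [Hphi [y Hy]]].
  { exists 1. intro m. rewrite (proj2 (proj2 (Hz m))). lra. }
  assert (Cw : converges (fun m => z (phi m)) (hsub hzero y)).
  { replace (fun m => z (phi m)) with (fun m => hsub (id_plus_K (z (phi m))) (K (z (phi m))))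
      by (apply functional_extensionality; intro m; unfold id_plus_K; hvec_eq).
    apply converges_sub; auto. apply (converges_subseq (fun n => id_plus_K (z n))); auto. }
  set (w := hsub hzero y) in *.
  assert (Zw : Z w) by (apply (CZ _ _ (fun m => proj1 (Hz (phi m))) Cw)).
  assert (Ow : orth w id_plus_K_ker)
    by (apply (orthc_closed id_plus_K_ker _ _ (fun m => proj1 (proj2 (Hz (phi m)))) Cw)).
  assert (Kw : id_plus_K w = hzero).
  { apply (converges_unique (fun m => id_plus_K (z (phi m)))); [apply (bl_converges _ id_plus_K_bl); auto|].
    apply (converges_subseq (fun n => id_plus_K (z n))); auto. }
  assert (Nw : w = hzero) by (apply (orth_self w id_plus_K_ker); auto; split; auto).
  apply converges_hnorm in Cw. rewrite Nw, hnorm_0 in Cw.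
  destruct (Cw (1 / 2)) as [N HN]; [lra|]. specialize (HN N (le_n _)).
  rewrite (proj2 (proj2 (Hz (phi N)))) in HN. unfold R_dist in HN. rewrite Rminus_0_r, Rabs_R1 in HN. lra.
Qed.

Lemma id_plus_K_bounded_below : exists c, 0 < c /\
  forall z, Z z -> orth z id_plus_K_ker -> hnorm z <= c * hnorm (id_plus_K z).
Proof.
  apply NNPP. intro Hn.
  assert (Seq : forall n : nat, exists z, (Z z /\ orth z id_plus_K_ker /\ hnorm z = 1) /\
     hnorm (id_plus_K z) < / (INR n + 1)).
  { intro n. pose proof (pos_INR n). apply NNPP. intro Hn2. apply Hn. exists (INR n + 1). split; [lra|].
    intros z Zz Oz. apply Rnot_lt_le. intro Hlt. apply Hn2.
    assert (Pz : 0 < hnorm z) by (pose proof (hnorm_nonneg z); pose proof (hnorm_nonneg (id_plus_K z)); nra).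
    exists (hscal (RC (/ hnorm z)) z).
    rewrite (bl_scal id_plus_K id_plus_K_bl), !hnorm_scal, Rabs_right by (apply Rle_ge; left; apply Rinv_0_lt_compat; auto).
    split; [split; [apply subsp_scal; auto | split; [apply orth_scal; auto | field; lra]]|].
    apply Rmult_lt_reg_l with (r := hnorm z * (INR n + 1)); [nra|].
    replace (hnorm z * (INR n + 1) * (/ hnorm z * hnorm (id_plus_K z))) with ((INR n + 1) * hnorm (id_plus_K z))
      by (field; lra).
    replace (hnorm z * (INR n + 1) * / (INR n + 1)) with (hnorm z) by (field; lra). lra. }
  destruct (choice _ Seq) as [z Hz].
  apply (no_unit_seq_annihilated z); [intro n; apply Hz|].
  apply (converges_dominated _ _ (fun n => / (INR n + 1))).
  - intro n. rewrite hsub_0r. left. apply Hz.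
  - intros e He. destruct (inv_INR_small e He) as [N HN]. exists N. intros n Hnk.
    unfold R_dist. rewrite Rminus_0_r, Rabs_right; [auto|].
    apply Rle_ge. left. apply Rinv_0_lt_compat. pose proof (pos_INR n); lra.
Qed.

Definition id_plus_K_image : X -> Prop := fun v => exists z, Z z /\ id_plus_K z = v.

Lemma id_plus_K_image_subsp : subsp id_plus_K_image.
Proof.
  pose proof id_plus_K_bl as HF. split; [|split].
  - exists hzero. split; [apply subsp0; auto | apply (bl_zero _ HF)].
  - intros a b [x [Zx <-]] [y [Zy <-]]. exists (hadd x y). split; [apply subsp_add; auto | apply (bl_add _ HF)].
  - intros c a [x [Zx <-]]. exists (hscal c x). split; [apply subsp_scal; auto | apply (bl_scal _ HF)].
Qed.

Lemma id_plus_K_image_closed : closedS id_plus_K_image.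
Proof.
  destruct id_plus_K_bounded_below as [c [Pc Bc]].
  apply (image_closed_of_bounded_below id_plus_K id_plus_K_bl Z id_plus_K_ker c); auto.
  - apply id_plus_K_ker_subsp.
  - apply id_plus_K_ker_closed.
Qed.

Lemma id_plus_K_image_in v : id_plus_K_image v -> Z v.
Proof. intros [z [Zz <-]]. unfold id_plus_K. apply subsp_add; auto. Qed.

(* An orthonormal sequence e_n in Z orthogonal to the image would satisfy
   <K e_n, e_m> = -delta_nm, which no convergent subsequence of K e_n can. *)
Lemma id_plus_K_cokernel_finite :
  exists vs, forall v, Z v -> orth v id_plus_K_image -> spanS vs v.
Proof.
  set (W := fun v => Z v /\ orth v id_plus_K_image).
  assert (SW : subsp W) by (apply subsp_inter; auto; apply orthc_subsp).
  destruct (finite_span_or_orthonormal_seq W SW) as [[vs Hvs]|[f [Wf [Uf Of]]]].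
  { exists vs. intros v Zv Ov. apply Hvs. split; auto. }
  exfalso.
  assert (HfK : forall n m, rinner (f m) (K (f n)) = if Nat.eq_dec n m then -1 else 0).
  { intros n m. assert (E : hinner (f m) (id_plus_K (f n)) = C0).
    { apply (proj2 (Wf m)). exists (f n). split; auto. apply Wf. }
    apply rinner_C0 in E. unfold id_plus_K in E. rewrite rinner_addr in E.
    unfold rinner in *. destruct (Nat.eq_dec n m) as [->|Ne].
    - rewrite Uf in E. simpl in E. lra.
    - rewrite Of in E; auto. simpl in E. lra. }
  destruct HK as [_ HC]. destruct (HC f) as [phi [Hphi [y Hy]]].
  { exists 1. intro m. rewrite hnorm_unit; auto. lra. }
  assert (Hy0 : forall k, rinner (f (phi k)) y = 0).
  { intro k. pose proof (converges_rinner _ _ (f (phi k)) Hy) as CR.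
    rewrite rinner_sym. apply (UL_sequence _ _ _ CR). intros e He. exists (S k). intros n Hnk. unfold R_dist.
    rewrite rinner_sym, HfK. destruct (Nat.eq_dec (phi n) (phi k)) as [E|].
    - exfalso. apply (strictly_increasing_inj phi Hphi n k); auto. lia.
    - rewrite Rminus_0_r, Rabs_R0. auto. }
  destruct (Hy 1) as [N HN]; [lra|]. specialize (HN N (le_n _)). unfold hdist in HN.
  pose proof (cauchy_schwarz_abs (f (phi N)) (hsub (K (f (phi N))) y)) as CS.
  rewrite rinner_subr, Hy0, HfK, hnorm_unit in CS; auto.
  destruct (Nat.eq_dec (phi N) (phi N)); [|congruence].
  replace (Rabs (-1 - 0)) with 1 in CS by (rewrite Rabs_left1; lra). unfold hsub in CS. lra.
Qed.

Theorem riesz_finite_codim : exists vs, forall u, Z u -> exists cs z, Z z /\ u = hadd (lincomb cs vs) (id_plus_K z).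
Proof.
  destruct id_plus_K_cokernel_finite as [vs Hvs]. exists vs. intros u Zu.
  destruct (Pr_in id_plus_K_image id_plus_K_image_subsp id_plus_K_image_closed u) as [z [Zz Ez]].
  destruct (Hvs (hsub u (Pr id_plus_K_image u))) as [cs Ecs].
  - apply subsp_sub; auto. apply id_plus_K_image_in, Pr_in; [apply id_plus_K_image_subsp | apply id_plus_K_image_closed].
  - apply Pr_orth; [apply id_plus_K_image_subsp | apply id_plus_K_image_closed].
  - exists cs, z. split; auto. rewrite <- Ecs, Ez. hvec_eq.
Qed.

End Riesz.

Section HodgeExactness.
Context {E0 E1 E2 : Hilbert}.
Variables (a : E0 -> E1) (a' : E1 -> E0) (b : E1 -> E2) (b' : E2 -> E1).
Hypotheses (Ha : bounded_linear a) (Ha' : bounded_linear a') (Hb : bounded_linear b) (Hb' : bounded_linear b').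
Hypotheses (Aa : is_adjoint a a') (Ab : is_adjoint b b').
Hypothesis Hba : forall x, b (a x) = hzero.

Lemma hodge_lap_bijective_of_exact :
  (forall v, b v = hzero <-> imS a v) -> closedS (imS b) -> bijective_map (hodge_lap a a' b b').
Proof.
  intros Ex Clb.
  assert (Cla : closedS (imS a)) by (apply (closed_ext _ (kerS b)); [intro; symmetry; apply Ex | apply ker_closed; auto]).
  assert (Inj : forall u, hodge_lap a a' b b' u = hzero -> u = hzero).
  { intros u Du. apply (hodge_lap_ker a a' b b' Ha Hb' Aa Ab u) in Du. destruct Du as [A1 B1].
    apply (orth_self u (imS a)); [apply (orth_im_iff a a'); auto | apply Ex; auto]. }
  pose proof (hodge_lap_bl a a' b b' Ha Ha' Hb Hb') as HD. split.
  - intros u v E. apply hsub_eq0, Inj. rewrite (bl_sub _ HD), E. apply hsub_diag.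
  - intro w. destruct (hodge_decomposition a a' b b' Ha Ha' Hb Hb' Aa Ab Hba Cla Clb w) as [u [r [Ew Dr]]].
    exists u. rewrite Ew, (Inj r Dr), hadd_0r. reflexivity.
Qed.

Lemma exact_of_hodge_lap_surjective :
  (forall w, exists u, hodge_lap a a' b b' u = w) -> forall v, b v = hzero <-> imS a v.
Proof.
  intros Sur v. split; [|intros [w <-]; apply Hba].
  intro Bv. destruct (Sur v) as [w Ew]. unfold hodge_lap, oadd, ocomp in Ew.
  (* b v = b b' b w, and <b b' b w, b w> = |b' b w|^2 forces b' b w = 0 *)
  assert (Hbbb : b (b' (b w)) = hzero) by (rewrite <- Ew, (bl_add b Hb), Hba, hadd_0 in Bv; exact Bv).
  assert (Hbb : b' (b w) = hzero) by (apply hnorm2_eq0; unfold hnorm2; rewrite <- Ab, Hbbb, hinner_0l; reflexivity).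
  exists (a' w). rewrite <- Ew, Hbb, hadd_0r. reflexivity.
Qed.

End HodgeExactness.

Section OperatorAlgebra.
Variable O : ClGOA.

Lemma L0_sub {g0 g1 : gw O} (F G : H O g0 -> H O g1) : L0 O F -> L0 O G -> L0 O (osub F G).
Proof.
  intros. replace (osub F G) with (oadd F (oscal (RC (-1)) G)); [apply L0_add, L0_scal; auto|].
  apply functional_extensionality. intro. unfold osub, oadd, oscal. rewrite hopp_scal. reflexivity.
Qed.

Lemma L0_adj_bl {g0 g1 : gw O} (F : H O g0 -> H O g1) : L0 O F -> bounded_linear (adj O F).
Proof. intro. apply L0_bl, L0_adj; auto. Qed.

Lemma sigma_zero l {g0 g1 : gw O} x : (l < nsym O)%nat -> sigma O l (@ozero (H O g0) (H O g1)) x = ozero.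
Proof. intro. apply sigma_smooth; auto. apply Linf_zero. Qed.

Definition smooth_eq {g0 g1 : gw O} (F G : H O g0 -> H O g1) : Prop := Linf O (osub F G).

Lemma smooth_eq_refl {g0 g1 : gw O} (F : H O g0 -> H O g1) : smooth_eq F F.
Proof.
  unfold smooth_eq. replace (osub F F) with (@ozero (H O g0) (H O g1)); [apply Linf_zero|].
  apply functional_extensionality; intro. symmetry; apply hadd_opp.
Qed.

Lemma smooth_eq_sym {g0 g1 : gw O} (F G : H O g0 -> H O g1) : smooth_eq F G -> smooth_eq G F.
Proof.
  unfold smooth_eq. intros. replace (osub G F) with (oscal (RC (-1)) (osub F G)); [apply Linf_scal; auto|].
  apply functional_extensionality; intro. unfold osub, oscal. hvec_eq.
Qed.

Lemma smooth_eq_trans {g0 g1 : gw O} (F G K : H O g0 -> H O g1) :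
  smooth_eq F G -> smooth_eq G K -> smooth_eq F K.
Proof.
  unfold smooth_eq. intros. replace (osub F K) with (oadd (osub F G) (osub G K)); [apply Linf_add; auto|].
  apply functional_extensionality; intro. unfold osub, oadd. hvec_eq.
Qed.

Lemma smooth_eq_add {g0 g1 : gw O} (F1 F2 G1 G2 : H O g0 -> H O g1) :
  smooth_eq F1 F2 -> smooth_eq G1 G2 -> smooth_eq (oadd F1 G1) (oadd F2 G2).
Proof.
  unfold smooth_eq. intros. replace (osub (oadd F1 G1) (oadd F2 G2)) with (oadd (osub F1 F2) (osub G1 G2));
    [apply Linf_add; auto|].
  apply functional_extensionality; intro. unfold osub, oadd. hvec_eq.
Qed.

Lemma smooth_eq_comp_l {g0 g1 g2 : gw O} (F1 F2 : H O g0 -> H O g1) (B : H O g1 -> H O g2) :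
  L0 O B -> smooth_eq F1 F2 -> smooth_eq (ocomp B F1) (ocomp B F2).
Proof.
  unfold smooth_eq. intros HB E. replace (osub (ocomp B F1) (ocomp B F2)) with (ocomp B (osub F1 F2));
    [apply Linf_comp_l; auto|].
  apply functional_extensionality; intro. unfold osub, ocomp.
  rewrite (bl_add B (L0_bl _ _ _ _ HB)), (bl_opp B (L0_bl _ _ _ _ HB)). reflexivity.
Qed.

Lemma smooth_eq_comp_r {g0 g1 g2 : gw O} (F1 F2 : H O g1 -> H O g2) (B : H O g0 -> H O g1) :
  L0 O B -> smooth_eq F1 F2 -> smooth_eq (ocomp F1 B) (ocomp F2 B).
Proof. unfold smooth_eq. intros HB E. apply (Linf_comp_r _ _ _ _ B (osub F1 F2)); auto. Qed.

End OperatorAlgebra.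

Lemma dependent_choice {I : Type} {T : I -> Type} (P : forall i, T i -> Prop) :
  (forall i, exists t, P i t) -> exists f : forall i, T i, forall i, P i (f i).
Proof.
  intro Hh. exists (fun i => proj1_sig (constructive_indefinite_description _ (Hh i))).
  intro i. exact (proj2_sig (constructive_indefinite_description _ (Hh i))).
Qed.

Section Complex.
Variable O : ClGOA.
Variable g : Z -> gw O.
Variable A : forall j : Z, H O (g j) -> H O (g (Z.succ j)).
Hypothesis HA : forall j, L0 O (A j).
Hypothesis Hcx : is_complex O g A.

Notation tr := (trH O g).
Notation Aprev := (Aprev O g A).
Notation Lap := (Laplacian O g A).

Lemma tr_sym_tr i k (e : i = k) v : tr e (tr (eq_sym e) v) = v.
Proof. destruct e. reflexivity. Qed.

Lemma tr_tr_sym i k (e : i = k) v : tr (eq_sym e) (tr e v) = v.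
Proof. destruct e. reflexivity. Qed.

Lemma L0_tr_comp i k (e : i = k) g0 (F : H O g0 -> H O (g i)) : L0 O F -> L0 O (fun v => tr e (F v)).
Proof. destruct e. auto. Qed.

Lemma L0_tr i k (e : i = k) : L0 O (tr e).
Proof. apply (L0_tr_comp i k e _ oid). apply L0_id. Qed.

Lemma tr_adjoint i k (e : i = k) u w : hinner (tr e u) w = hinner u (tr (eq_sym e) w).
Proof. destruct e. reflexivity. Qed.

Lemma tr_conj (F : forall k, H O (g k) -> H O (g k)) p j (e : Z.succ p = j) v :
  tr e (F (Z.succ p) (tr (eq_sym e) v)) = F j v.
Proof. destruct e. reflexivity. Qed.

(* Aprev (succ p) is A p up to the identification of the degrees pred (succ p) and p *)
Definition tau p : H O (g p) -> H O (g (Z.pred (Z.succ p))) := tr (eq_sym (Z.pred_succ p)).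
Definition tau_inv p : H O (g (Z.pred (Z.succ p))) -> H O (g p) := tr (Z.pred_succ p).

Lemma Aprev_succ p v : Aprev (Z.succ p) (tau p v) = A p v.
Proof.
  unfold Aprev, tau. generalize (Z.succ_pred (Z.succ p)). generalize (Z.pred_succ p).
  intros e1 e2. revert e2. rewrite e1. intro e2. rewrite (UIP_dec Z.eq_dec e2 eq_refl). reflexivity.
Qed.

Lemma Aprev_succ_fun p : Aprev (Z.succ p) = ocomp (A p) (tau_inv p).
Proof.
  apply functional_extensionality. intro w. unfold ocomp. rewrite <- Aprev_succ. unfold tau, tau_inv.
  rewrite tr_tr_sym. reflexivity.
Qed.

Lemma A_fun p : A p = ocomp (Aprev (Z.succ p)) (tau p).
Proof. apply functional_extensionality. intro w. unfold ocomp. rewrite Aprev_succ. reflexivity. Qed.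

Lemma complex_succ p v : A (Z.succ p) (A p v) = hzero.
Proof. rewrite <- (Aprev_succ p v). apply Hcx. Qed.

Lemma L0_Aprev j : L0 O (Aprev j).
Proof. apply L0_tr_comp, HA. Qed.

Lemma adj_Aprev_succ p : adj O (Aprev (Z.succ p)) = ocomp (tau p) (adj O (A p)).
Proof.
  apply (adjoint_unique (Aprev (Z.succ p))); [apply adj_spec, L0_Aprev|].
  intros x y. rewrite Aprev_succ_fun. unfold ocomp, tau_inv, tau. rewrite (adj_spec _ _ _ _ (HA p)).
  apply tr_adjoint.
Qed.

Lemma Lap_succ p : Lap (Z.succ p) = oadd (ocomp (A p) (adj O (A p))) (ocomp (adj O (A (Z.succ p))) (A (Z.succ p))).
Proof.
  unfold Laplacian. f_equal. rewrite adj_Aprev_succ, Aprev_succ_fun.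
  apply functional_extensionality. intro. unfold ocomp, tau, tau_inv. rewrite tr_sym_tr. reflexivity.
Qed.

Lemma L0_Lap j : L0 O (Lap j).
Proof. apply L0_add; apply L0_comp; try apply L0_adj; auto; apply L0_Aprev. Qed.

Lemma Lap_selfadjoint j : is_adjoint (Lap j) (Lap j).
Proof. apply hodge_lap_selfadjoint; apply adj_spec; auto. apply L0_Aprev. Qed.

Lemma A_Lap j : ocomp (A j) (Lap j) = ocomp (Lap (Z.succ j)) (A j).
Proof.
  rewrite (Lap_succ j). apply functional_extensionality. intro v. unfold Laplacian, ocomp, oadd.
  rewrite (bl_add _ (L0_bl _ _ _ _ (HA j))), Hcx, hadd_0.
  rewrite complex_succ, (bl_zero _ (L0_adj_bl O _ (HA (Z.succ j)))), hadd_0r. reflexivity.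
Qed.

Lemma adj_A_Lap j z : Lap j (adj O (A j) z) = adj O (A j) (Lap (Z.succ j) z).
Proof.
  assert (Ab : is_adjoint (A j) (adj O (A j))) by (apply adj_spec; auto).
  assert (Z1 : forall z, adj O (Aprev j) (adj O (A j) z) = hzero)
    by (apply (adjoint_comp_zero (Aprev j) _ (A j)); auto; apply adj_spec, L0_Aprev).
  assert (Z2 : forall z, adj O (A j) (adj O (A (Z.succ j)) z) = hzero)
    by (apply (adjoint_comp_zero (A j) _ (A (Z.succ j))); auto; [apply adj_spec; auto | apply complex_succ]).
  rewrite (Lap_succ j). unfold Laplacian, oadd, ocomp.
  rewrite Z1, (bl_zero _ (L0_bl _ _ _ _ (L0_Aprev j))), hadd_0.
  rewrite (bl_add _ (L0_adj_bl O _ (HA j))), Z2, hadd_0r. reflexivity.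
Qed.

Lemma symbol_im_Aprev_succ l x p v : (l < nsym O)%nat ->
  (exists w, sigma O l (Aprev (Z.succ p)) x w = v) <-> (exists w, sigma O l (A p) x w = v).
Proof.
  intro Hl. split; intros [w <-].
  - rewrite Aprev_succ_fun, sigma_comp; auto; [|apply L0_tr]. eexists; reflexivity.
  - rewrite A_fun, sigma_comp; auto; [|apply L0_tr | apply L0_Aprev]. eexists; reflexivity.
Qed.

Lemma symbol_Lap l x j : (l < nsym O)%nat ->
  sigma O l (Lap j) x = hodge_lap (sigma O l (Aprev j) x) (sigma O l (adj O (Aprev j)) x)
                                  (sigma O l (A j) x) (sigma O l (adj O (A j)) x).
Proof.
  intro Hl. pose proof (L0_Aprev j). pose proof (L0_adj O _ _ _ (HA j)). pose proof (L0_adj O _ _ _ H).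
  unfold Laplacian, hodge_lap. rewrite sigma_add, !sigma_comp; auto; apply L0_comp; auto.
Qed.

Lemma symbol_complex l x j w : (l < nsym O)%nat -> sigma O l (A j) x (sigma O l (Aprev j) x w) = hzero.
Proof.
  intro Hl. change (ocomp (sigma O l (A j) x) (sigma O l (Aprev j) x) w = hzero).
  rewrite <- sigma_comp; auto; [|apply L0_Aprev].
  replace (ocomp (A j) (Aprev j)) with (@ozero (H O (g (Z.pred j))) (H O (g (Z.succ j))))
    by (apply functional_extensionality; intro; symmetry; apply Hcx).
  rewrite sigma_zero; auto.
Qed.

End Complex.

Section Ellipticity.
Variable O : ClGOA.
Variable g : Z -> gw O.
Variable A : forall j : Z, H O (g j) -> H O (g (Z.succ j)).
Hypothesis HA : forall j, L0 O (A j).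
Hypothesis Hcx : is_complex O g A.

Notation Aprev := (Aprev O g A).
Notation Lap := (Laplacian O g A).

Lemma elliptic_complex_iff_laplacians :
  elliptic_complex O g A <-> forall j, elliptic_op O (Lap j).
Proof.
  pose proof (L0_Aprev O g A HA) as LAp.
  assert (Sym : forall l x j, (l < nsym O)%nat ->
    bounded_linear (sigma O l (Aprev j) x) /\ bounded_linear (sigma O l (adj O (Aprev j)) x) /\
    bounded_linear (sigma O l (A j) x) /\ bounded_linear (sigma O l (adj O (A j)) x) /\
    is_adjoint (sigma O l (Aprev j) x) (sigma O l (adj O (Aprev j)) x) /\
    is_adjoint (sigma O l (A j) x) (sigma O l (adj O (A j)) x) /\
    forall w, sigma O l (A j) x (sigma O l (Aprev j) x w) = hzero).
  { intros l x j Hl. repeat split; try apply sigma_bl; try apply sigma_adj; try apply L0_adj; auto.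
    intro w. apply (symbol_complex O g A HA Hcx); auto. }
  split.
  - intros Ell j l Hl x. unfold elliptic_op. rewrite (symbol_Lap O g A HA l x j Hl).
    destruct (Sym l x j Hl) as [Ha [Ha' [Hb [Hb' [Aa [Ab Hba]]]]]].
    apply (hodge_lap_bijective_of_exact _ _ _ _ Ha Ha' Hb Hb' Aa Ab Hba (Ell l Hl x j)).
    apply (closed_ext _ (kerS (sigma O l (A (Z.succ j)) x))); [|apply ker_closed, sigma_bl; auto].
    intro v. unfold imS, kerS. rewrite (Ell l Hl x (Z.succ j) v).
    symmetry. apply (symbol_im_Aprev_succ O g A HA); auto.
  - intros Ell l Hl x j. destruct (Ell j l Hl x) as [_ Sur]. rewrite (symbol_Lap O g A HA l x j Hl) in Sur.
    destruct (Sym l x j Hl) as [Ha [Ha' [Hb [Hb' [Aa [Ab Hba]]]]]].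
    exact (exact_of_hodge_lap_surjective _ _ _ _ Hb Ab Hba Sur).
Qed.

Definition laplacian_parametrix (G : forall j, H O (g j) -> H O (g j)) : Prop :=
  forall j, L0 O (G j) /\ smooth_eq O (ocomp (G j) (Lap j)) oid /\ smooth_eq O (ocomp (Lap j) (G j)) oid.

Lemma laplacian_parametrix_exists :
  (forall j, elliptic_op O (Lap j)) -> exists G, laplacian_parametrix G.
Proof.
  intro EL. apply (dependent_choice (fun j (B : H O (g j) -> H O (g j)) =>
    L0 O B /\ smooth_eq O (ocomp B (Lap j)) oid /\ smooth_eq O (ocomp (Lap j) B) oid)). intro j.
  destruct (proj1 (sigma_elliptic O _ _ _ (L0_Lap O g A HA j)) (EL j)) as [B [LB [E1 E2]]].
  exists B. split; auto.
Qed.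

Definition adjoint_parametrix (G : forall j, H O (g j) -> H O (g j)) : forall j, H O (g (Z.succ j)) -> H O (g j) :=
  fun j => ocomp (adj O (A j)) (G (Z.succ j)).

Lemma Aprev_adjoint_parametrix G j :
  ocomp (Aprev j) (Bnext O g (adjoint_parametrix G) j) = ocomp (Aprev j) (ocomp (adj O (Aprev j)) (G j)).
Proof.
  apply functional_extensionality. intro v.
  set (F := fun k (w : H O (g k)) => Aprev k (adj O (Aprev k) (G k w))).
  change (trH O g (Z.succ_pred j) (A (Z.pred j) (adj O (A (Z.pred j))
            (G (Z.succ (Z.pred j)) (trH O g (eq_sym (Z.succ_pred j)) v)))) = F j v).
  replace (A (Z.pred j) (adj O (A (Z.pred j)) (G (Z.succ (Z.pred j)) (trH O g (eq_sym (Z.succ_pred j)) v))))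
    with (F (Z.succ (Z.pred j)) (trH O g (eq_sym (Z.succ_pred j)) v)); [apply (tr_conj O g F)|].
  unfold F. rewrite (adj_Aprev_succ O g A HA), (Aprev_succ_fun O g A). unfold ocomp, tau, tau_inv.
  rewrite tr_sym_tr. reflexivity.
Qed.

Lemma parametrix_intertwines G j : laplacian_parametrix G ->
  smooth_eq O (ocomp (G (Z.succ j)) (A j)) (ocomp (A j) (G j)).
Proof.
  intro HG. destruct (HG j) as [LG [_ E2]]. destruct (HG (Z.succ j)) as [LG' [E1' _]].
  (* G' A = G' A (Lap G) = G' (A Lap) G = (G' Lap') A G = A G, modulo smoothing *)
  apply smooth_eq_trans with (ocomp (G (Z.succ j)) (ocomp (A j) (ocomp (Lap j) (G j)))).
  - apply smooth_eq_sym.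
    change (smooth_eq O (ocomp (ocomp (G (Z.succ j)) (A j)) (ocomp (Lap j) (G j)))
                        (ocomp (ocomp (G (Z.succ j)) (A j)) oid)).
    apply smooth_eq_comp_l; auto. apply L0_comp; auto.
  - change (smooth_eq O (ocomp (ocomp (G (Z.succ j)) (ocomp (A j) (Lap j))) (G j)) (ocomp (A j) (G j))).
    rewrite (A_Lap O g A HA Hcx).
    change (smooth_eq O (ocomp (ocomp (G (Z.succ j)) (Lap (Z.succ j))) (ocomp (A j) (G j)))
                        (ocomp oid (ocomp (A j) (G j)))).
    apply smooth_eq_comp_r; auto. apply L0_comp; auto.
Qed.

Lemma complex_parametrix_of_laplacian G : laplacian_parametrix G -> cx_parametrix O g A (adjoint_parametrix G).
Proof.
  intros HG j. destruct (HG j) as [LG [E1 E2]]. destruct (HG (Z.succ j)) as [LG' _].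
  pose proof (L0_Aprev O g A HA j) as LAp.
  assert (LAd : L0 O (adj O (A j))) by (apply L0_adj; auto).
  split; [apply L0_comp; auto|].
  change (smooth_eq O (oadd (ocomp (Aprev j) (Bnext O g (adjoint_parametrix G) j))
                            (ocomp (adjoint_parametrix G j) (A j))) oid).
  rewrite Aprev_adjoint_parametrix.
  apply smooth_eq_trans with (oadd (ocomp (Aprev j) (ocomp (adj O (Aprev j)) (G j)))
                                   (ocomp (adj O (A j)) (ocomp (A j) (G j)))); [|exact E2].
  apply smooth_eq_add; [apply smooth_eq_refl|].
  change (smooth_eq O (ocomp (adj O (A j)) (ocomp (G (Z.succ j)) (A j))) (ocomp (adj O (A j)) (ocomp (A j) (G j)))).
  apply smooth_eq_comp_l, parametrix_intertwines; auto.
Qed.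

(* A parametrix gives A_(j-1) B_(j-1) + B_j A_j = 1 + K with K compact, and K maps ker A_j
   into itself, so Riesz theory applies on ker A_j. *)
Lemma fredholm_complex_of_parametrix B : cx_parametrix O g A B -> fredholm_complex O g A.
Proof.
  intros HB j. destruct (HB j) as [LB Hinf].
  set (K := osub (oadd (ocomp (Aprev j) (Bnext O g B j)) (ocomp (B j) (A j))) oid).
  assert (HK : compact_op K) by (apply Linf_compact; auto).
  pose proof (L0_bl _ _ _ _ (HA j)) as BA. pose proof (L0_bl _ _ _ _ LB) as BB.
  assert (KZ : forall z, kerS (A j) z -> kerS (A j) (K z)).
  { intros z Hz. unfold kerS in *. unfold K, osub, oadd, ocomp, oid.
    rewrite (bl_add _ BA), (bl_add _ BA), (bl_opp _ BA), Hz, Hcx, hopp_0, hadd_0, hadd_0r.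
    rewrite (bl_zero _ BB), (bl_zero _ BA). reflexivity. }
  destruct (riesz_finite_codim (kerS (A j)) (ker_subsp _ BA) (ker_closed _ BA) K HK KZ) as [vs Hvs].
  exists vs. intros u Hu. destruct (Hvs u Hu) as [cs [z [Zz Ez]]]. exists cs, (Bnext O g B j z).
  rewrite Ez. f_equal. unfold id_plus_K, K, osub, oadd, ocomp, oid. unfold kerS in Zz.
  rewrite Zz, (bl_zero _ BB). hvec_eq.
Qed.

Lemma adjoint_parametrix_complex G :
  (forall q y, G q (adj O (A q) y) = adj O (A q) (G (Z.succ q) y)) ->
  forall j v, adjoint_parametrix G j (adjoint_parametrix G (Z.succ j) v) = hzero.
Proof.
  intros Comm j v. unfold adjoint_parametrix, ocomp. rewrite Comm.
  apply (adjoint_comp_zero (A j) _ (A (Z.succ j))); try apply adj_spec; auto.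
  apply (complex_succ O g A Hcx).
Qed.

End Ellipticity.
Lemma image_closed_of_finite_cohomology {X Y W : Hilbert} (T : X -> Y) (c : Y -> W) (vs : list Y) :
  bounded_linear T -> bounded_linear c -> (forall x, c (T x) = hzero) ->
  (forall u, c u = hzero -> exists cs w, u = hadd (lincomb cs vs) (T w)) -> closedS (imS T).
Proof.
  intros HT Hc HcT Hcov. set (Q := Pr (kerS c)).
  assert (SK : subsp (kerS c)) by (apply ker_subsp; auto). assert (CK : closedS (kerS c)) by (apply ker_closed; auto).
  apply (image_closed_of_finite_codim (map Q vs) T (kerS c)); auto.
  - intros w Hw. apply in_map_iff in Hw. destruct Hw as [v [<- _]]. apply Pr_in; auto.
  - intros u Hu. destruct (Hcov u Hu) as [cs [w Ew]]. exists w, cs.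
    rewrite <- (Pr_id _ SK CK u Hu), Ew, (bl_add _ (Pr_bl _ SK CK)), (Pr_id _ SK CK (T w)) by apply HcT.
    rewrite (bl_lincomb _ _ _ (Pr_bl _ SK CK)). apply hadd_comm.
Qed.

Section Fredholm.
Variable O : ClGOA.
Variable g : Z -> gw O.
Variable A : forall j : Z, H O (g j) -> H O (g (Z.succ j)).
Hypothesis HA : forall j, L0 O (A j).
Hypothesis Hcx : is_complex O g A.

Notation Aprev := (Aprev O g A).
Notation Lap := (Laplacian O g A).

Lemma laplacian_fredholm_of_fredholm_complex : fredholm_complex O g A -> forall j, fredholm_op (Lap j).
Proof.
  intros FC j.
  set (a := Aprev j). set (a' := adj O a). set (b := A j). set (b' := adj O b).
  assert (Ha : bounded_linear a) by (apply L0_bl, L0_Aprev; auto).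
  assert (Ha' : bounded_linear a') by (apply L0_adj_bl, L0_Aprev; auto).
  assert (Hb : bounded_linear b) by (apply L0_bl; auto).
  assert (Hb' : bounded_linear b') by (apply L0_adj_bl; auto).
  assert (Aa : is_adjoint a a') by (apply adj_spec, L0_Aprev; auto).
  assert (Ab : is_adjoint b b') by (apply adj_spec; auto).
  assert (Hba : forall w, b (a w) = hzero) by apply Hcx.
  destruct (FC j) as [vs Hvs].
  assert (Cla : closedS (imS a)) by (apply (image_closed_of_finite_cohomology a b vs); auto).
  assert (Clb : closedS (imS b)).
  { destruct (FC (Z.succ j)) as [ws Hws].
    apply (image_closed_of_finite_cohomology b (A (Z.succ j)) ws); auto.
    - apply L0_bl; auto.
    - intro. apply (complex_succ O g A Hcx).
    - intros u Hu. destruct (Hws u Hu) as [cs [w Ew]]. exists cs, (tau_inv O g j w).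
      rewrite Ew, (Aprev_succ_fun O g A). reflexivity. }
  (* the harmonic space ker Lap_j = ker a' /\ ker b is spanned by the projections of vs onto (im a)^perp *)
  set (Q := Pr (orthc (imS a))).
  assert (SQ : subsp (orthc (imS a))) by apply orthc_subsp. assert (CQ : closedS (orthc (imS a))) by apply orthc_closed.
  assert (Hker : forall k, Lap j k = hzero -> exists cs, k = lincomb cs (map Q vs)).
  { intros k Dk. apply (hodge_lap_ker a a' b b' Ha Hb' Aa Ab k) in Dk. destruct Dk as [K1 K2].
    destruct (Hvs k K2) as [cs [w Ew]]. exists cs.
    rewrite <- (Pr_id _ SQ CQ k) by (apply (orth_im_iff a a'); auto).
    rewrite Ew. unfold Q. rewrite (bl_add _ (Pr_bl _ SQ CQ)), (Pr_orth_zero _ SQ CQ (Aprev j w)), hadd_0r.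
    - apply (bl_lincomb _ _ _ (Pr_bl _ SQ CQ)).
    - intros s Hs. apply hinner_C0_sym, Hs. exists w; auto. }
  split; [|split].
  - apply L0_bl, L0_Lap; auto.
  - exists (map Q vs). auto.
  - exists (map Q vs). intro y.
    destruct (hodge_decomposition a a' b b' Ha Ha' Hb Hb' Aa Ab Hba Cla Clb y) as [x [r [Ey Dr]]].
    destruct (Hker r Dr) as [cs Ecs]. exists x, cs. rewrite Ey, Ecs. reflexivity.
Qed.

Definition exact_lap_inverse (G P : forall j, H O (g j) -> H O (g j)) : Prop :=
  forall j, L0 O (G j) /\ orth_proj_ker O (Lap j) (P j) /\
    ocomp (G j) (Lap j) = osub oid (P j) /\ ocomp (Lap j) (G j) = osub oid (P j).

Lemma exact_lap_inverse_exists : ext_fredholm_property O -> (forall j, elliptic_op O (Lap j)) ->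
  exists G P, exact_lap_inverse G P.
Proof.
  intros [FP EXT] EL.
  assert (Ch : forall j, exists GP : (H O (g j) -> H O (g j)) * (H O (g j) -> H O (g j)),
     L0 O (fst GP) /\ orth_proj_ker O (Lap j) (snd GP) /\
     ocomp (fst GP) (Lap j) = osub oid (snd GP) /\ ocomp (Lap j) (fst GP) = osub oid (snd GP)).
  { intro j. pose proof (L0_Lap O g A HA j) as LD.
    assert (FD : fredholm_op (Lap j)) by (apply FP; auto; apply (sigma_elliptic O _ _ _ LD), EL).
    destruct (EXT _ _ LD (Lap_selfadjoint O g A HA j) FD) as [G [P HGP]]. exists (G, P). exact HGP. }
  apply (dependent_choice (T := fun j => ((H O (g j) -> H O (g j)) * (H O (g j) -> H O (g j)))%type)) in Ch.
  destruct Ch as [GP HGP]. exists (fun j => fst (GP j)), (fun j => snd (GP j)). exact HGP.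
Qed.

Lemma exact_lap_inverse_parametrix G P : (forall j, elliptic_op O (Lap j)) ->
  exact_lap_inverse G P -> laplacian_parametrix O g A G.
Proof.
  intros EL HGP j. destruct (HGP j) as [LG [HP [E1 E2]]].
  assert (LP : L0 O (P j)).
  { replace (P j) with (osub oid (ocomp (G j) (Lap j))); [apply L0_sub, L0_comp; auto; [apply L0_id | apply L0_Lap; auto]|].
    apply functional_extensionality. intro v. rewrite E1. unfold osub, oid. hvec_eq. }
  (* P = -(B Lap - 1) P for any parametrix B of Lap, since Lap P = 0 *)
  assert (PLinf : Linf O (P j)).
  { destruct (proj1 (sigma_elliptic O _ _ _ (L0_Lap O g A HA j)) (EL j)) as [B0 [LB0 [K1 _]]].
    pose proof (Linf_comp_r _ _ _ _ (P j) _ LP K1) as K2.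
    replace (P j) with (oscal (RC (-1)) (ocomp (osub (ocomp B0 (Lap j)) oid) (P j))); [apply Linf_scal; auto|].
    apply functional_extensionality. intro v. unfold oscal, ocomp, osub, oid.
    rewrite (proj1 (HP v)), (bl_zero _ (L0_bl _ _ _ _ LB0)). hvec_eq. }
  split; auto. unfold smooth_eq. rewrite E1, E2.
  replace (osub (osub oid (P j)) oid) with (oscal (RC (-1)) (P j)); [split; apply Linf_scal; auto|].
  apply functional_extensionality. intro v. unfold oscal, osub, oid. hvec_eq.
Qed.

Lemma exact_lap_inverse_adjoint_commute G P : exact_lap_inverse G P ->
  forall q y, G q (adj O (A q) y) = adj O (A q) (G (Z.succ q) y).
Proof.
  intros HGP q y. set (b' := adj O (A q)).
  assert (Hb' : bounded_linear b') by (apply L0_adj_bl; auto).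
  assert (Ab : is_adjoint (A q) b') by (apply adj_spec; auto).
  destruct (HGP q) as [_ [HPq [E1q _]]]. destruct (HGP (Z.succ q)) as [_ [HPs [_ E2s]]].
  assert (P1 : forall z, b' (P (Z.succ q) z) = hzero).
  { intro z. pose proof (proj1 (HPs z)) as D. rewrite (Lap_succ O g A HA q) in D.
    apply (hodge_lap_ker (A q) b' (A (Z.succ q)) (adj O (A (Z.succ q)))) in D;
      [apply D | apply L0_bl, HA | apply L0_adj_bl, HA | apply Ab | apply adj_spec, HA]. }
  (* b' z is orthogonal to ker Lap_q, which P q projects onto *)
  assert (P2 : forall z, P q (b' z) = hzero).
  { intro z. destruct (HPq (b' z)) as [Pk Po].
    apply (orth_self _ (kerS (Lap q))); [|exact Pk].
    replace (P q (b' z)) with (hsub (b' z) (hsub (b' z) (P q (b' z)))) by hvec_eq.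
    apply orth_sub; [|intros s Hs; apply Po; exact Hs].
    intros k Hk. apply (hodge_lap_ker (Aprev q) (adj O (Aprev q)) (A q) b') in Hk;
      [| apply L0_bl, L0_Aprev; auto | apply L0_adj_bl, HA | apply adj_spec, L0_Aprev; auto | apply Ab].
    apply hinner_C0_sym. rewrite <- Ab, (proj2 Hk). apply hinner_0l. }
  pose proof (equal_f E2s y) as F2. pose proof (equal_f E1q (b' (G (Z.succ q) y))) as F1.
  unfold ocomp, osub, oid in F1, F2.
  rewrite (adj_A_Lap O g A HA Hcx), F2 in F1.
  change (G q (b' (hsub y (P (Z.succ q) y))) = hsub (b' (G (Z.succ q) y)) (P q (b' (G (Z.succ q) y)))) in F1.
  rewrite (bl_sub _ Hb'), P1, P2, !hsub_0r in F1. exact F1.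
Qed.

End Fredholm.

Theorem mainTheorem11 (O : ClGOA) (g : Z -> gw O)
  (A : forall j : Z, H O (g j) -> H O (g (Z.succ j)))
  (HA : forall j, L0 O (A j))
  (Hcx : is_complex O g A) :
  (elliptic_complex O g A <-> forall j, elliptic_op O (Laplacian O g A j)) /\
  (elliptic_complex O g A ->
     (exists B, cx_parametrix O g A B) /\ fredholm_complex O g A) /\
  (fredholm_property O ->
     (elliptic_complex O g A <-> exists B, cx_parametrix O g A B) /\
     (elliptic_complex O g A <-> fredholm_complex O g A)) /\
  (ext_fredholm_property O -> elliptic_complex O g A ->
     exists B, cx_parametrix O g A B /\
       forall j v, B j (B (Z.succ j) v) = hzero).
Proof.
  pose proof (elliptic_complex_iff_laplacians O g A HA Hcx) as Eab.
  assert (Ebc : elliptic_complex O g A -> exists B, cx_parametrix O g A B).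
  { intro EC. destruct (laplacian_parametrix_exists O g A HA (proj1 Eab EC)) as [G HG].
    exists (adjoint_parametrix O g A G). apply complex_parametrix_of_laplacian; auto. }
  pose proof (fredholm_complex_of_parametrix O g A HA Hcx) as Ecd.
  assert (Eda : fredholm_property O -> fredholm_complex O g A -> elliptic_complex O g A).
  { intros FP FC. apply Eab. intro j. pose proof (L0_Lap O g A HA j) as LD.
    exact (proj2 (sigma_elliptic O _ _ _ LD)
             (proj2 (FP _ _ _ LD) (laplacian_fredholm_of_fredholm_complex O g A HA Hcx FC j))). }
  split; [exact Eab|]. split; [|split].
  - intro EC. destruct (Ebc EC) as [B HB]. split; [exists B|apply (Ecd B)]; auto.
  - intro FP. split; split; auto.
    + intros [B HB]. apply Eda, (Ecd B); auto.
    + intro EC. destruct (Ebc EC) as [B HB]. apply (Ecd B HB).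
  - intros EXT EC. pose proof (proj1 Eab EC) as EL.
    destruct (exact_lap_inverse_exists O g A HA EXT EL) as [G [P HGP]].
    exists (adjoint_parametrix O g A G). split.
    + apply complex_parametrix_of_laplacian; auto. apply (exact_lap_inverse_parametrix O g A HA G P); auto.
    + apply adjoint_parametrix_complex; auto. apply (exact_lap_inverse_adjoint_commute O g A HA Hcx G P HGP).
Qed.
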